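(* Assume the regularity estimate $t\|u'(t)\|+t^2\|u''(t)\|+t^3\|u'''(t)\|\le Ct^\sigma$ ($t>0$) holds for some $\sigma>0$, and the time mesh is $t_n=(n\tau)^\gamma$ with $\gamma\ge1$. Then for $1\le n\le N$, with $\delta=\sigma-2/\gamma$, \[ \|\psi^n\|\le\|\psi\|_{I_n}\le C\times\begin{cases}\tau^2\log(t_n/t_1),&\text{if }\gamma=2/\sigma,\\ \tau^{\min(\gamma\sigma,2)}t_n^{\max(0,\delta)},&\text{if }\gamma\ne2/\sigma,\end{cases} \] where $\|\psi\|_{I_n}=\sup_{t\in I_n}\|\psi(t)\|$.
   Context: $\Omega\subset\mathbb{R}^d$ ($d\le3$) convex polyhedron, $0<\alpha<1$, $\kappa\in W^{1,\infty}(\Omega)$, $\kappa\ge\kappa_{\min}>0$, $\mathcal{A}w=-\nabla\cdot(\kappa\nabla w)$; $u$ solves $\partial_t^\alpha u+\mathcal{A}u=f$ on $\Omega\times(0,T]$ with $u=0$ on $\partial\Omega$, $u(0)=u_0$ (Caputo derivative $\partial_t^\alpha v(t)=\int_0^t\frac{(t-s)^{-\alpha}}{\Gamma(1-\alpha)}v'(s)\,ds$). $\|\cdot\|$ is the $L^2(\Omega)$ norm. Time mesh $t_n=(n\tau)^\gamma$, $0\le n\le N$, $\tau=T^{1/\gamma}/N$, $\tau_n=t_n-t_{n-1}$, $I_n=(t_{n-1},t_n)$. $\widehat u$ is continuous on $[0,T]$, linear on each $\overline{I_n}$, $\widehat u(0)=u_0$, $\int_{I_n}\widehat u\,dt=\int_{I_n}u\,dt$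 for $1\le n\le N$; $\psi=u-\widehat u$, $\psi^n=\psi(t_n)$. $C$ is a generic constant, bounded for $0<\alpha\le1$, independent of $N,\tau$. *)

From Stdlib Require Import Reals.
From Coquelicot Require Import Coquelicot.
Open Scope R_scope.

(* Graded mesh t_n = (n tau)^gamma, tau = T^(1/gamma)/N; t_0 = 0
   (handled separately since Stdlib's Rpower 0 g = 1). *)
Definition mesh_tau (T gamma : R) (N : nat) : R := Rpower T (/ gamma) / INR N.

Definition mesh (T gamma : R) (N : nat) (n : nat) : R :=
  match n with
  | O => 0
  | S _ => Rpower (INR n * mesh_tau T gamma N) gamma
  end.

Definition sup_norm_on {V : NormedModule R_AbsRing} (f : R -> V) (a b : R) : Rbar :=
  Lub_Rbar (fun r => exists t, a < t < b /\ r = norm (f t)).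

Definition rate (T sigma gamma : R) (N n : nat) : R :=
  let tau := mesh_tau T gamma N in
  let tn := mesh T gamma N n in
  let t1 := mesh T gamma N 1 in
  if Req_EM_T gamma (2 / sigma) then tau ^ 2 * (1 + ln (tn / t1))
  else Rpower tau (Rmin (gamma * sigma) 2) * Rpower tn (Rmax 0 (sigma - 2 / gamma)).

(* Let E_n be the mean over I_n of the linear-interpolation error of u, that is
   E_n = (u(t_{n-1}) + u(t_n)) / 2 - (mean of u over I_n).  Since uh is linear on
   I_n with the same mean as u, the nodal errors satisfy psi^n = 2 E_n - psi^{n-1}
   with psi^0 = 0, hence
     |psi^n - E_n| <= |psi^{n-1} - E_{n-1}| + |E_n - E_{n-1}|.
   On the graded mesh the regularity estimate gives |E_n| <~ n^(gs-2) tau^(gs)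
   (g = gamma, s = sigma) by a second-order Taylor bound, and
   |E_n - E_{n-1}| <~ n^(gs-3) tau^(gs) for n >= 3, by differentiating the
   interpolation error along the family of cells sliding from I_{n-1} to I_n
   (this uses u''' and the second difference of the mesh).  Summing n^(gs-3)
   produces the three regimes gs < 2, gs = 2, gs > 2, namely tau^(gs),
   tau^2 log n and n^(gs-2) tau^(gs) = tau^2 t_n^(s-2/g).  Inside I_n, psi is the
   linear interpolant of psi^{n-1} and psi^n minus the interpolation error, which
   bounds sup_{I_n} |psi|; finally |psi^n| <= sup_{I_n} |psi| because psi is
   left-continuous at t_n. *)

From Stdlib Require Import Reals Lra Lia Classical.
From Coquelicot Require Import Coquelicot.
Open Scope R_scope.

(** * Linear combinations in a normed module *)

Record coef6 := Coef6 { cf1 : R; cf2 : R; cf3 : R; cf4 : R; cf5 : R; cf6 : R }.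

Definition coef6_add (c d : coef6) : coef6 :=
  Coef6 (cf1 c + cf1 d) (cf2 c + cf2 d) (cf3 c + cf3 d)
        (cf4 c + cf4 d) (cf5 c + cf5 d) (cf6 c + cf6 d).

Definition coef6_scal (k : R) (c : coef6) : coef6 :=
  Coef6 (k * cf1 c) (k * cf2 c) (k * cf3 c) (k * cf4 c) (k * cf5 c) (k * cf6 c).

Definition lincomb6 {V : NormedModule R_AbsRing} (v1 v2 v3 v4 v5 v6 : V) (c : coef6) : V :=
  plus (scal (cf1 c) v1) (plus (scal (cf2 c) v2) (plus (scal (cf3 c) v3)
    (plus (scal (cf4 c) v4) (plus (scal (cf5 c) v5) (scal (cf6 c) v6))))).

Section Lincomb6.
Context {V : NormedModule R_AbsRing} (v1 v2 v3 v4 v5 v6 : V) (p : coef6 -> V).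
Hypothesis Hp : p = lincomb6 v1 v2 v3 v4 v5 v6.

Let scal_zero (u : V) : scal 0 u = zero := scal_zero_l u.
Let scal_1 (u : V) : scal 1 u = u := scal_one u.

Lemma lincomb6_plus c d : plus (p c) (p d) = p (coef6_add c d).
Proof.
  assert (distr : forall (a b : R) (u : V), scal (a + b) u = plus (scal a u) (scal b u))
    by (intros; exact (scal_distr_r a b u)).
  subst p; unfold lincomb6, coef6_add; simpl. rewrite !distr.
  assert (swap : forall x y z w : V, plus (plus x y) (plus z w) = plus (plus x z) (plus y w)).
  { intros. rewrite !plus_assoc. f_equal. rewrite <- !plus_assoc. f_equal. apply plus_comm. }
  set (w1 := scal (cf1 c) v1). set (w2 := scal (cf2 c) v2). set (w3 := scal (cf3 c) v3).
  set (w4 := scal (cf4 c) v4). set (w5 := scal (cf5 c) v5).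
  rewrite (swap w1), (swap w2), (swap w3), (swap w4), (swap w5). reflexivity.
Qed.

Lemma lincomb6_scal k c : scal k (p c) = p (coef6_scal k c).
Proof.
  assert (assoc : forall (a b : R) (u : V), scal a (scal b u) = scal (a * b) u)
    by (intros; exact (scal_assoc a b u)).
  subst p; unfold lincomb6, coef6_scal; simpl. rewrite !scal_distr_l, !assoc. reflexivity.
Qed.

Lemma lincomb6_opp c : opp (p c) = p (coef6_scal (-1) c).
Proof. rewrite <- lincomb6_scal. exact (eq_sym (scal_opp_one _)). Qed.

Lemma lincomb6_minus c d : minus (p c) (p d) = p (coef6_add c (coef6_scal (-1) d)).
Proof. unfold minus. rewrite lincomb6_opp, lincomb6_plus. reflexivity. Qed.

Lemma lincomb6_zero : zero = p (Coef6 0 0 0 0 0 0).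
Proof. subst p; unfold lincomb6; simpl. rewrite !scal_zero, !plus_zero_r. reflexivity. Qed.

Lemma lincomb6_e1 : v1 = p (Coef6 1 0 0 0 0 0).
Proof. subst p; unfold lincomb6; simpl. rewrite !scal_zero, !plus_zero_r, scal_1. reflexivity. Qed.
Lemma lincomb6_e2 : v2 = p (Coef6 0 1 0 0 0 0).
Proof. subst p; unfold lincomb6; simpl. rewrite !scal_zero, !plus_zero_r, plus_zero_l, scal_1. reflexivity. Qed.
Lemma lincomb6_e3 : v3 = p (Coef6 0 0 1 0 0 0).
Proof. subst p; unfold lincomb6; simpl. rewrite !scal_zero, !plus_zero_r, !plus_zero_l, scal_1. reflexivity. Qed.
Lemma lincomb6_e4 : v4 = p (Coef6 0 0 0 1 0 0).
Proof. subst p; unfold lincomb6; simpl. rewrite !scal_zero, !plus_zero_r, !plus_zero_l, scal_1. reflexivity. Qed.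
Lemma lincomb6_e5 : v5 = p (Coef6 0 0 0 0 1 0).
Proof. subst p; unfold lincomb6; simpl. rewrite !scal_zero, !plus_zero_r, !plus_zero_l, scal_1. reflexivity. Qed.
Lemma lincomb6_e6 : v6 = p (Coef6 0 0 0 0 0 1).
Proof. subst p; unfold lincomb6; simpl. rewrite !scal_zero, !plus_zero_l, scal_1. reflexivity. Qed.

End Lincomb6.

(* Proves an identity between linear combinations of at most six vectors by
   normalising both sides to coordinates against [v1 .. v6] (unused slots are
   filled with [zero]); one real equation per coordinate is left. *)
Ltac lincomb_eq v1 v2 v3 v4 v5 v6 :=
  let p := fresh "p" in let Hp := fresh "Hp" in
  pose (p := lincomb6 v1 v2 v3 v4 v5 v6);
  assert (Hp : p = lincomb6 v1 v2 v3 v4 v5 v6) by reflexivity;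
  clearbody p;
  try rewrite (lincomb6_zero v1 v2 v3 v4 v5 v6 p Hp);
  try rewrite (lincomb6_e1 v1 v2 v3 v4 v5 v6 p Hp);
  try rewrite (lincomb6_e2 v1 v2 v3 v4 v5 v6 p Hp);
  try rewrite (lincomb6_e3 v1 v2 v3 v4 v5 v6 p Hp);
  try rewrite (lincomb6_e4 v1 v2 v3 v4 v5 v6 p Hp);
  try rewrite (lincomb6_e5 v1 v2 v3 v4 v5 v6 p Hp);
  try rewrite (lincomb6_e6 v1 v2 v3 v4 v5 v6 p Hp);
  repeat first [ rewrite (lincomb6_minus v1 v2 v3 v4 v5 v6 p Hp)
               | rewrite (lincomb6_plus v1 v2 v3 v4 v5 v6 p Hp)
               | rewrite (lincomb6_scal v1 v2 v3 v4 v5 v6 p Hp)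
               | rewrite (lincomb6_opp v1 v2 v3 v4 v5 v6 p Hp) ];
  clear Hp; f_equal; unfold coef6_add, coef6_scal; simpl; f_equal.

Section NormFacts.
Context {V : NormedModule R_AbsRing}.

Lemma norm_minus_diag (a : V) : norm (minus a a) = 0.
Proof. rewrite minus_eq_zero. apply norm_zero. Qed.

Lemma norm_minus_comm (a b : V) : norm (minus a b) = norm (minus b a).
Proof. rewrite <- norm_opp, opp_minus. reflexivity. Qed.

Lemma norm_minus_triangle (a b c : V) :
  norm (minus a c) <= norm (minus a b) + norm (minus b c).
Proof. rewrite (minus_trans b). apply norm_triangle. Qed.

Lemma norm_minus_le (a b : V) : norm (minus a b) <= norm a + norm b.
Proof. unfold minus. rewrite <- (norm_opp b). apply norm_triangle. Qed.

Lemma norm_le_minus_add (a b : V) : norm a <= norm (minus a b) + norm b.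
Proof.
  replace a with (plus (minus a b) b) at 1
    by (unfold minus; rewrite <- plus_assoc, plus_opp_l, plus_zero_r; reflexivity).
  apply norm_triangle.
Qed.

Lemma norm_reflection_le (a b e e' : V) :
  a = minus (scal 2 e) b -> norm (minus a e) <= norm (minus e e') + norm (minus b e').
Proof.
  intros ->.
  apply Rle_trans with (norm (minus (minus e e') (minus b e'))); [|apply norm_minus_le].
  right. f_equal. lincomb_eq e b e' (@zero V) (@zero V) (@zero V); ring.
Qed.

Lemma norm_scal_le (k : R) (x : V) : norm (scal k x) <= Rabs k * norm x.
Proof. exact (norm_scal k x). Qed.

End NormFacts.

Lemma continuous_R_of_derive (f : R -> R) x : ex_derive f x -> continuous f x.
Proof. intros H. exact (@ex_derive_continuous R_AbsRing R_NormedModule f x H). Qed.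

Lemma is_derive_scal_r {V : NormedModule R_AbsRing} (g : R -> V) x l k :
  is_derive g x l -> is_derive (fun y => scal k (g y)) x (scal k l).
Proof.
  intros H. eapply filterdiff_ext_lin.
  - apply filterdiff_scal_r_fct; [intros n m; apply Rmult_comm | exact H].
  - intros y. simpl. rewrite !scal_assoc. f_equal. apply Rmult_comm.
Qed.

Lemma is_derive_locally_approx {V : NormedModule R_AbsRing} (f : R -> V) x l e :
  is_derive f x l -> 0 < e ->
  locally x (fun w => norm (minus (minus (f w) (f x)) (scal (w - x) l)) <= e * Rabs (w - x)).
Proof. intros [_ Hd] He. exact (Hd x (fun P H => H) (mkposreal e He)). Qed.

(** * Mean value inequalities *)

Lemma le_at_left_limit (phi psi : R -> R) s :
  continuous phi s -> continuous psi s ->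
  at_left s (fun w => phi w <= psi w) -> phi s <= psi s.
Proof.
  intros Hphi Hpsi Hle.
  exact (@filterlim_le _ (at_left s) (Proper_StrongProper _ (at_left_proper_filter s))
           phi psi (phi s) (psi s) Hle
           (filterlim_filter_le_1 _ (filter_le_within _) Hphi)
           (filterlim_filter_le_1 _ (filter_le_within _) Hpsi)).
Qed.

Lemma le_at_right_limit (phi psi : R -> R) s :
  continuous phi s -> continuous psi s ->
  at_right s (fun w => phi w <= psi w) -> phi s <= psi s.
Proof.
  intros Hphi Hpsi Hle.
  exact (@filterlim_le _ (at_right s) (Proper_StrongProper _ (at_right_proper_filter s))
           phi psi (phi s) (psi s) Hle
           (filterlim_filter_le_1 _ (filter_le_within _) Hphi)
           (filterlim_filter_le_1 _ (filter_le_within _) Hpsi)).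
Qed.

Lemma real_induction (P : R -> Prop) x y :
  x <= y -> P x ->
  (forall s, x < s <= y -> (forall w, x <= w < s -> P w) -> P s) ->
  (forall s, x <= s < y -> (forall w, x <= w <= s -> P w) -> at_right s P) ->
  P y.
Proof.
  intros Hxy Px Hclosed Hopen.
  set (E := fun z => x <= z <= y /\ forall w, x <= w <= z -> P w).
  assert (HEx : E x).
  { split; [lra|]. intros w Hw. replace w with x by lra. exact Px. }
  destruct (completeness E) as [s [Hub Hlub]].
  { exists y. intros z [Hz _]. lra. }
  { exists x. exact HEx. }
  assert (Hxs : x <= s) by (apply Hub; exact HEx).
  assert (Hsy : s <= y) by (apply Hlub; intros z [Hz _]; lra).
  assert (Hbelow : forall w, x <= w < s -> P w).
  { intros w Hw. destruct (classic (exists z, E z /\ w <= z)) as [[z [[_ Hz] Hwz]] | Hn].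
    - apply Hz. lra.
    - assert (s <= w); [|lra]. apply Hlub. intros z Hz. apply Rnot_lt_le. intros Hlt.
      apply Hn. exists z. split; [exact Hz | lra]. }
  assert (Hupto : forall w, x <= w <= s -> P w).
  { intros w Hw. destruct (Req_dec w s) as [->|Hws]; [|apply Hbelow; lra].
    destruct (Req_dec x s) as [<-|Hxs']; [exact Px | apply Hclosed; auto; lra]. }
  destruct (Req_dec s y) as [<-|Hsy']; [apply Hupto; lra|].
  destruct (Hopen s ltac:(lra) Hupto) as [d Hd].
  assert (Hd0 := cond_pos d).
  set (s' := Rmin (s + d / 2) y).
  assert (Hs' : s < s') by (apply Rmin_glb_lt; lra).
  assert (Hs'd : s' <= s + d / 2) by apply Rmin_l.
  assert (Hs'y : s' <= y) by apply Rmin_r.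
  assert (HEs' : E s').
  { split; [lra|]. intros w Hw.
    destruct (Rle_lt_dec w s); [apply Hupto; lra|].
    apply Hd; [|lra].
    change (Rabs (w - s) < d). rewrite Rabs_right by lra. lra. }
  assert (s' <= s) by (apply Hub; exact HEs'). lra.
Qed.

Section MeanValue.
Context {V : NormedModule R_AbsRing}.

Lemma norm_increment_right_continuous (f : R -> V) (g : R -> R) x e :
  continuous f x -> continuous g x -> 0 < e ->
  at_right x (fun w => norm (minus (f w) (f x)) <= g w - g x + e).
Proof.
  intros Hf Hg He.
  apply (filter_le_within _).
  assert (Hf' := proj1 (filterlim_locally_ball_norm f (f x)) Hf (pos_div_2 (mkposreal e He))).
  assert (Hg' := proj1 (filterlim_locally g (g x)) Hg (pos_div_2 (mkposreal e He))).
  eapply filter_imp; [| exact (filter_and _ _ Hf' Hg')].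
  intros w [Hfw Hgw]. unfold ball_norm in Hfw. simpl in Hfw, Hgw.
  change (Rabs (g w - g x) < e / 2) in Hgw. apply Rabs_def2 in Hgw. lra.
Qed.

Lemma norm_increment_right_derive (f : R -> V) (g : R -> R) s df dg e :
  is_derive f s df -> is_derive g s dg -> norm df <= dg -> 0 < e ->
  at_right s (fun w => norm (minus (f w) (f s)) <= g w - g s + e * (w - s)).
Proof.
  intros Hf Hg Hb He.
  assert (He2 : 0 < e / 2) by lra.
  generalize (filter_and _ _ (is_derive_locally_approx f s df _ Hf He2)
                             (is_derive_locally_approx g s dg _ Hg He2)).
  intros [d Hd]. exists d. intros w Hw Hsw. cbv beta in Hsw. destruct (Hd w Hw) as [Hfw Hgw].
  assert (Hws : Rabs (w - s) = w - s) by (apply Rabs_right; lra). rewrite Hws in Hfw, Hgw.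
  change (Rabs (g w - g s - (w - s) * dg) <= e / 2 * (w - s)) in Hgw.
  assert (Hg_low := Rle_abs (- (g w - g s - (w - s) * dg))). rewrite Rabs_Ropp in Hg_low.
  assert (Hscal : norm (scal (w - s) df) <= (w - s) * dg).
  { eapply Rle_trans; [apply norm_scal_le|]. rewrite Rabs_right by lra.
    apply Rmult_le_compat_l; lra. }
  pose proof (norm_le_minus_add (minus (f w) (f s)) (scal (w - s) df)). lra.
Qed.

Lemma mean_value_ineq (f df : R -> V) (g dg : R -> R) x y :
  x <= y ->
  (forall z, x <= z <= y -> continuous f z) ->
  (forall z, x <= z <= y -> continuous g z) ->
  (forall z, x < z < y -> is_derive f z (df z)) ->
  (forall z, x < z < y -> is_derive g z (dg z)) ->
  (forall z, x < z < y -> norm (df z) <= dg z) ->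
  norm (minus (f y) (f x)) <= g y - g x.
Proof.
  intros Hxy Hcf Hcg Hdf Hdg Hb.
  apply Rle_plus_epsilon. intros eps Heps.
  set (e := eps / (y - x + 1)).
  assert (He : 0 < e) by (apply Rdiv_lt_0_compat; lra).
  replace (g y - g x + eps) with (g y - g x + e * (y - x) + e) by (unfold e; field; lra).
  set (Q := fun w => norm (minus (f w) (f x)) <= g w - g x + e * (w - x) + e).
  apply (real_induction Q x y Hxy).
  - unfold Q. rewrite norm_minus_diag. lra.
  - intros s Hs HQ.
    apply (le_at_left_limit (fun w => norm (minus (f w) (f x)))
                            (fun w => g w - g x + e * (w - x) + e)).
    + apply (continuous_comp (fun w => minus (f w) (f x)) norm).
      * apply (continuous_minus f (fun _ => f x)); [apply Hcf; lra | apply continuous_const].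
      * apply filterlim_norm.
    + apply continuity_pt_filterlim.
      apply continuity_pt_plus; [apply continuity_pt_plus|apply continuity_pt_const; intros ? ?; reflexivity].
      * apply continuity_pt_minus; [|apply continuity_pt_const; intros ? ?; reflexivity].
        apply continuity_pt_filterlim, Hcg. lra.
      * apply continuity_pt_scal, continuity_pt_minus;
          [apply continuity_pt_id | apply continuity_pt_const; intros ? ?; reflexivity].
    + assert (Hd : 0 < s - x) by lra.
      exists (mkposreal _ Hd). intros w Hw Hws. apply HQ.
      change (Rabs (w - s) < s - x) in Hw. apply Rabs_def2 in Hw. lra.
  - intros s Hs HQ.
    assert (Hright : at_right s (fun w => s < w)) by (exists (mkposreal 1 Rlt_0_1); auto).
    destruct (Req_dec s x) as [->|Hsx].
    + eapply filter_imp; [| exact (filter_and _ _ Hright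
               (norm_increment_right_continuous f g x e (Hcf x ltac:(lra)) (Hcg x ltac:(lra)) He))].
      intros w [Hw Hinc]. unfold Q. nra.
    + eapply filter_imp; [| exact (filter_and _ _ Hright
               (norm_increment_right_derive f g s (df s) (dg s) e
                  (Hdf s ltac:(lra)) (Hdg s ltac:(lra)) (Hb s ltac:(lra)) He))].
      intros w [Hw Hinc]. unfold Q.
      pose proof (norm_minus_triangle (f w) (f s) (f x)).
      assert (Q s) by (apply HQ; lra). unfold Q in *. lra.
Qed.

Lemma mean_value_ineq_const (f df : R -> V) M x y :
  x <= y ->
  (forall z, x <= z <= y -> continuous f z) ->
  (forall z, x < z < y -> is_derive f z (df z)) ->
  (forall z, x < z < y -> norm (df z) <= M) ->
  norm (minus (f y) (f x)) <= M * (y - x).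
Proof.
  intros Hxy Hc Hd Hb.
  replace (M * (y - x)) with (M * y - M * x) by ring.
  apply (mean_value_ineq f df (fun z => M * z) (fun _ => M)); auto.
  - intros z _. apply continuous_R_of_derive. auto_derive. auto.
  - intros z _. auto_derive; auto; ring.
Qed.

Lemma mean_value_ineq_abs (f df : R -> V) M lo hi x y :
  (forall z, lo < z < hi -> is_derive f z (df z)) ->
  (forall z, lo < z < hi -> norm (df z) <= M) ->
  lo < x < hi -> lo < y < hi ->
  norm (minus (f y) (f x)) <= M * Rabs (y - x).
Proof.
  intros Hd Hb Hx Hy.
  assert (Hc : forall z, lo < z < hi -> continuous f z)
    by (intros z Hz; apply ex_derive_continuous; exists (df z); apply Hd, Hz).
  destruct (Rle_lt_dec x y).
  - rewrite Rabs_right by lra.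
    apply (mean_value_ineq_const f df); [lra | | |]; intros z Hz; [apply Hc | apply Hd | apply Hb]; lra.
  - rewrite Rabs_left, norm_minus_comm by lra. replace (M * - (y - x)) with (M * (x - y)) by ring.
    apply (mean_value_ineq_const f df); [lra | | |]; intros z Hz; [apply Hc | apply Hd | apply Hb]; lra.
Qed.

Lemma taylor2_remainder (f f1 f2 : R -> V) lo hi M c y :
  lo < c < hi -> lo <= y <= hi ->
  (forall z, lo <= z <= hi -> continuous f z) ->
  (forall z, lo < z < hi -> is_derive f z (f1 z)) ->
  (forall z, lo < z < hi -> is_derive f1 z (f2 z)) ->
  (forall z, lo < z < hi -> norm (f2 z) <= M) ->
  norm (minus (minus (f y) (f c)) (scal (y - c) (f1 c))) <= M * (y - c) ^ 2.
Proof.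
  intros Hc Hy Hcf Hd1 Hd2 Hb.
  set (phi := fun z => minus (f z) (scal (z - c) (f1 c))).
  set (dphi := fun z => minus (f1 z) (f1 c)).
  replace (minus (minus (f y) (f c)) (scal (y - c) (f1 c))) with (minus (phi y) (phi c))
    by (unfold phi; lincomb_eq (f y) (f c) (f1 c) (@zero V) (@zero V) (@zero V); ring).
  assert (Hcphi : forall z, lo <= z <= hi -> continuous phi z).
  { intros z Hz. apply continuous_minus; [apply Hcf; auto|].
    apply (continuous_scal_l (fun z => z - c)).
    apply continuous_R_of_derive. auto_derive. auto. }
  assert (Hdphi : forall z, lo < z < hi -> is_derive phi z (dphi z)).
  { intros z Hz. unfold dphi. rewrite <- (scal_one (f1 c)).
    apply is_derive_minus; [apply Hd1; auto|].
    apply (is_derive_scal_l (fun z => z - c)). auto_derive; auto; ring. }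
  assert (Hlip : forall z, lo < z < hi -> norm (dphi z) <= M * Rabs (z - c))
    by (intros z Hz; exact (mean_value_ineq_abs f1 f2 M lo hi c z Hd2 Hb Hc Hz)).
  assert (HM : 0 <= M) by (eapply Rle_trans; [apply (norm_ge_0 (f2 c)) | apply (Hb c Hc)]).
  destruct (Rle_lt_dec c y).
  - replace (M * (y - c) ^ 2) with (M * (y - c) ^ 2 - M * (c - c) ^ 2) by ring.
    apply (mean_value_ineq phi dphi (fun z => M * (z - c) ^ 2) (fun z => 2 * M * (z - c))); try lra.
    + intros z Hz; apply Hcphi; lra.
    + intros z Hz. apply continuous_R_of_derive. auto_derive. auto.
    + intros z Hz; apply Hdphi; lra.
    + intros z Hz. auto_derive; auto; ring.
    + intros z Hz. eapply Rle_trans; [apply Hlip; lra|]. rewrite Rabs_right by lra. nra.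
  - rewrite norm_minus_comm.
    replace (M * (y - c) ^ 2) with ((- M * (c - c) ^ 2) - (- M * (c - y) ^ 2)) by ring.
    apply (mean_value_ineq phi dphi (fun z => - M * (c - z) ^ 2) (fun z => 2 * M * (c - z))); try lra.
    + intros z Hz; apply Hcphi; lra.
    + intros z Hz. apply continuous_R_of_derive. auto_derive. auto.
    + intros z Hz; apply Hdphi; lra.
    + intros z Hz. auto_derive; auto; ring.
    + intros z Hz. eapply Rle_trans; [apply Hlip; lra|]. rewrite Rabs_left by lra. nra.
Qed.

End MeanValue.

(** * Linear interpolation error *)

Definition lin_interp {V : ModuleSpace R_Ring} (a b : R) (A B : V) (t : R) : V :=
  plus (scal ((b - t) / (b - a)) A) (scal ((t - a) / (b - a)) B).

Definition interp_err {V : NormedModule R_AbsRing} (f : R -> V) (a b th : R) : V :=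
  minus (plus (scal (1 - th) (f a)) (scal th (f b))) (f (a + th * (b - a))).

Section InterpErr.
Context {V : NormedModule R_AbsRing}.
Implicit Types f : R -> V.

Lemma interp_err_0 f a b : interp_err f a b 0 = zero.
Proof.
  unfold interp_err. replace (a + 0 * (b - a)) with a by ring.
  lincomb_eq (f a) (f b) (@zero V) (@zero V) (@zero V) (@zero V); ring.
Qed.

Lemma interp_err_1 f a b : interp_err f a b 1 = zero.
Proof.
  unfold interp_err. replace (a + 1 * (b - a)) with b by ring.
  lincomb_eq (f a) (f b) (@zero V) (@zero V) (@zero V) (@zero V); ring.
Qed.

Lemma continuous_interp_err f a b th :
  (forall z, continuous f z) -> continuous (interp_err f a b) th.
Proof.
  intros Hc. unfold interp_err.
  assert (C1 : continuous (fun th : R => 1 - th) th)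
    by (apply continuous_R_of_derive; auto_derive; auto).
  assert (C2 : continuous (fun th : R => th) th)
    by (apply continuous_R_of_derive; auto_derive; auto).
  assert (C3 : continuous (fun th : R => a + th * (b - a)) th)
    by (apply continuous_R_of_derive; auto_derive; auto).
  exact (continuous_minus _ _ th
           (continuous_plus _ _ th (continuous_scal_l _ (f a) th C1) (continuous_scal_l _ (f b) th C2))
           (continuous_comp _ f th C3 (Hc _))).
Qed.

Lemma interp_err_le_oscillation f a b th :
  0 <= th <= 1 ->
  norm (interp_err f a b th) <= (1 - th) * norm (minus (f a) (f (a + th * (b - a))))
                                + th * norm (minus (f b) (f (a + th * (b - a)))).
Proof.
  intros Hth. set (c := a + th * (b - a)).
  replace (interp_err f a b th)
    with (plus (scal (1 - th) (minus (f a) (f c))) (scal th (minus (f b) (f c))))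
    by (unfold interp_err; fold c; lincomb_eq (f a) (f b) (f c) (@zero V) (@zero V) (@zero V); ring).
  eapply Rle_trans; [exact (norm_triangle _ _)|].
  apply Rplus_le_compat; (eapply Rle_trans; [apply norm_scal_le|]);
    rewrite Rabs_right by lra; lra.
Qed.

Lemma interp_err_le_second_deriv f f1 f2 a b M th :
  a < b -> 0 <= th <= 1 ->
  (forall z, a <= z <= b -> continuous f z) ->
  (forall z, a < z < b -> is_derive f z (f1 z)) ->
  (forall z, a < z < b -> is_derive f1 z (f2 z)) ->
  (forall z, a < z < b -> norm (f2 z) <= M) ->
  norm (interp_err f a b th) <= M * (b - a) ^ 2.
Proof.
  intros Hab Hth Hc Hd1 Hd2 Hb.
  assert (HM : 0 <= M) by (eapply Rle_trans; [apply (norm_ge_0 (f2 ((a + b) / 2))) | apply Hb; lra]).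
  assert (Hbound0 : 0 <= M * (b - a) ^ 2) by (apply Rmult_le_pos; [lra | apply pow2_ge_0]).
  destruct (Req_dec th 0) as [->|H0]; [rewrite interp_err_0, norm_zero; exact Hbound0|].
  destruct (Req_dec th 1) as [->|H1]; [rewrite interp_err_1, norm_zero; exact Hbound0|].
  set (c := a + th * (b - a)).
  assert (Hc1 : a < c < b) by (unfold c; split; nra).
  (* Taylor-expand both endpoint values at the interpolation point [c]; the first-order terms cancel *)
  replace (interp_err f a b th) with
    (plus (scal (1 - th) (minus (minus (f a) (f c)) (scal (a - c) (f1 c))))
          (scal th (minus (minus (f b) (f c)) (scal (b - c) (f1 c)))))
    by (unfold interp_err; fold c;
        lincomb_eq (f a) (f b) (f c) (f1 c) (@zero V) (@zero V); unfold c; ring).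
  assert (Ta := taylor2_remainder f f1 f2 a b M c a Hc1 ltac:(lra) Hc Hd1 Hd2 Hb).
  assert (Tb := taylor2_remainder f f1 f2 a b M c b Hc1 ltac:(lra) Hc Hd1 Hd2 Hb).
  eapply Rle_trans; [exact (norm_triangle _ _)|].
  eapply Rle_trans; [apply Rplus_le_compat; apply norm_scal_le|].
  rewrite !Rabs_right by lra.
  assert (M * (a - c) ^ 2 <= M * (b - a) ^ 2) by (apply Rmult_le_compat_l; nra).
  assert (M * (b - c) ^ 2 <= M * (b - a) ^ 2) by (apply Rmult_le_compat_l; nra).
  nra.
Qed.

Section MovingInterval.
Variables (f f1 : R -> V) (a b alpha beta th : R).
Let A s := a + s * alpha.
Let B s := b + s * beta.
Let C s := A s + th * (B s - A s).

Lemma is_derive_interp_err_moving s :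
  is_derive f (A s) (f1 (A s)) -> is_derive f (B s) (f1 (B s)) -> is_derive f (C s) (f1 (C s)) ->
  is_derive (fun s => interp_err f (A s) (B s) th) s
    (plus (scal alpha (interp_err f1 (A s) (B s) th))
          (scal (th * (beta - alpha)) (minus (f1 (B s)) (f1 (C s))))).
Proof.
  intros HA HB HC.
  assert (DA : is_derive (fun s => f (A s)) s (scal alpha (f1 (A s)))).
  { apply (is_derive_comp f A); [exact HA|]. unfold A. auto_derive; auto; ring. }
  assert (DB : is_derive (fun s => f (B s)) s (scal beta (f1 (B s)))).
  { apply (is_derive_comp f B); [exact HB|]. unfold B. auto_derive; auto; ring. }
  assert (DC : is_derive (fun s => f (C s)) s
                 (scal ((1 - th) * alpha + th * beta) (f1 (C s)))).
  { apply (is_derive_comp f C); [exact HC|]. unfold C, A, B. auto_derive; auto; ring. }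
  assert (DF := is_derive_minus _ _ _ _ _
                  (is_derive_plus _ _ _ _ _ (is_derive_scal_r _ _ _ (1 - th) DA)
                                            (is_derive_scal_r _ _ _ th DB)) DC).
  replace (plus (scal alpha (interp_err f1 (A s) (B s) th))
                (scal (th * (beta - alpha)) (minus (f1 (B s)) (f1 (C s)))))
    with (minus (plus (scal (1 - th) (scal alpha (f1 (A s)))) (scal th (scal beta (f1 (B s)))))
                (scal ((1 - th) * alpha + th * beta) (f1 (C s))))
    by (unfold interp_err; fold (C s);
        lincomb_eq (f1 (A s)) (f1 (B s)) (f1 (C s)) (@zero V) (@zero V) (@zero V); ring).
  exact DF.
Qed.

Lemma continuous_interp_err_moving s :
  continuous f (A s) -> continuous f (B s) -> continuous f (C s) ->
  continuous (fun s => interp_err f (A s) (B s) th) s.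
Proof.
  intros HA HB HC.
  assert (CA : continuous (fun s => f (A s)) s)
    by (apply (continuous_comp A f); [apply continuous_R_of_derive; unfold A; auto_derive; auto | exact HA]).
  assert (CB : continuous (fun s => f (B s)) s)
    by (apply (continuous_comp B f); [apply continuous_R_of_derive; unfold B; auto_derive; auto | exact HB]).
  assert (CC : continuous (fun s => f (C s)) s)
    by (apply (continuous_comp C f); [apply continuous_R_of_derive; unfold C, A, B; auto_derive; auto | exact HC]).
  exact (continuous_minus _ _ s (continuous_plus _ _ s (continuous_scal_r (1 - th) _ s CA)
                                                      (continuous_scal_r th _ s CB)) CC).
Qed.

End MovingInterval.

Lemma interp_err_moving_derive_le f1 f2 f3 lo hi a b alpha beta M2 M3 h th :
  lo < a -> a < b -> b < hi -> b - a <= h -> 0 <= alpha -> 0 <= th <= 1 ->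
  (forall z, lo < z < hi -> is_derive f1 z (f2 z)) ->
  (forall z, lo < z < hi -> is_derive f2 z (f3 z)) ->
  (forall z, lo < z < hi -> norm (f2 z) <= M2) ->
  (forall z, lo < z < hi -> norm (f3 z) <= M3) ->
  norm (plus (scal alpha (interp_err f1 a b th))
             (scal (th * (beta - alpha)) (minus (f1 b) (f1 (a + th * (b - a))))))
  <= alpha * M3 * h ^ 2 + Rabs (beta - alpha) * M2 * h.
Proof.
  intros Hlo Hab Hhi Hh Halpha Hth Hd2 Hd3 HM2 HM3.
  set (c := a + th * (b - a)).
  assert (Hc : a <= c <= b) by (unfold c; split; nra).
  assert (HM2p : 0 <= M2) by (eapply Rle_trans; [apply (norm_ge_0 (f2 a)) | apply HM2; lra]).
  assert (HM3p : 0 <= M3) by (eapply Rle_trans; [apply (norm_ge_0 (f3 a)) | apply HM3; lra]).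
  assert (Hc1 : forall z, lo < z < hi -> continuous f1 z)
    by (intros z Hz; apply ex_derive_continuous; exists (f2 z); apply Hd2, Hz).
  eapply Rle_trans; [exact (norm_triangle _ _)|].
  apply Rplus_le_compat; (eapply Rle_trans; [apply norm_scal_le|]).
  - rewrite Rabs_right by lra. rewrite Rmult_assoc. apply Rmult_le_compat_l; [lra|].
    eapply Rle_trans.
    { apply (interp_err_le_second_deriv f1 f2 f3 a b M3 th);
        [lra | lra | intros z Hz; apply Hc1 | intros z Hz; apply Hd2
        | intros z Hz; apply Hd3 | intros z Hz; apply HM3]; lra. }
    apply Rmult_le_compat_l; [lra|]. apply pow_incr. lra.
  - rewrite Rabs_mult, (Rabs_right th) by lra.
    assert (Hlip : norm (minus (f1 b) (f1 c)) <= M2 * h).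
    { eapply Rle_trans; [apply (mean_value_ineq_abs f1 f2 M2 lo hi); auto; lra|].
      apply Rmult_le_compat_l; [lra|]. rewrite Rabs_right by lra. lra. }
    set (D := Rabs (beta - alpha)). assert (0 <= D) by apply Rabs_pos.
    assert (0 <= norm (minus (f1 b) (f1 c))) by apply norm_ge_0.
    assert (D * norm (minus (f1 b) (f1 c)) <= D * (M2 * h)) by (apply Rmult_le_compat_l; lra).
    assert (0 <= D * norm (minus (f1 b) (f1 c))) by (apply Rmult_le_pos; lra).
    nra.
Qed.

Lemma interp_err_shift_le f f1 f2 f3 a1 b1 a2 b2 M2 M3 h th :
  a1 < a2 -> b1 < b2 -> a1 < b1 -> a2 < b2 -> 0 <= th <= 1 ->
  b1 - a1 <= h -> b2 - a2 <= h ->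
  (forall z, a1 <= z <= b2 -> continuous f z) ->
  (forall z, a1 < z < b2 -> is_derive f z (f1 z)) ->
  (forall z, a1 < z < b2 -> is_derive f1 z (f2 z)) ->
  (forall z, a1 < z < b2 -> is_derive f2 z (f3 z)) ->
  (forall z, a1 < z < b2 -> norm (f2 z) <= M2) ->
  (forall z, a1 < z < b2 -> norm (f3 z) <= M3) ->
  norm (minus (interp_err f a2 b2 th) (interp_err f a1 b1 th))
    <= (a2 - a1) * M3 * h ^ 2 + Rabs ((b2 - a2) - (b1 - a1)) * M2 * h.
Proof.
  intros Ha12 Hb12 Hab1 Hab2 Hth Hh1 Hh2 Hc Hd1 Hd2 Hd3 HM2 HM3.
  set (A := fun s => a1 + s * (a2 - a1)).
  set (B := fun s => b1 + s * (b2 - b1)).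
  set (C := fun s => A s + th * (B s - A s)).
  assert (Hrange : forall s, 0 <= s <= 1 ->
            a1 <= A s <= C s /\ C s <= B s <= b2 /\ 0 < B s - A s <= h).
  { intros s Hs.
    assert (HD : B s - A s = (1 - s) * (b1 - a1) + s * (b2 - a2)) by (unfold A, B; ring).
    assert (HCA : C s - A s = th * (B s - A s)) by (unfold C; ring).
    assert (0 < B s - A s).
    { rewrite HD. assert (0 <= (1 - s) * (b1 - a1)) by (apply Rmult_le_pos; lra).
      destruct (Rle_lt_dec s 0); [replace s with 0 by lra; lra|].
      assert (0 < s * (b2 - a2)) by (apply Rmult_lt_0_compat; lra). lra. }
    assert (a1 <= A s) by (unfold A; nra).
    assert (B s <= b2) by (unfold B; nra).
    repeat split; nra. }
  assert (Hinner : forall s, 0 < s < 1 -> a1 < A s /\ B s < b2)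
    by (intros s Hs; unfold A, B; split; nra).
  replace (interp_err f a2 b2 th) with (interp_err f (A 1) (B 1) th) by (unfold A, B; f_equal; ring).
  replace (interp_err f a1 b1 th) with (interp_err f (A 0) (B 0) th) by (unfold A, B; f_equal; ring).
  replace ((a2 - a1) * M3 * h ^ 2 + Rabs ((b2 - a2) - (b1 - a1)) * M2 * h)
    with (((a2 - a1) * M3 * h ^ 2 + Rabs ((b2 - b1) - (a2 - a1)) * M2 * h) * (1 - 0))
    by (replace ((b2 - b1) - (a2 - a1)) with ((b2 - a2) - (b1 - a1)) by ring; ring).
  apply (mean_value_ineq_const (fun s => interp_err f (A s) (B s) th)
           (fun s => plus (scal (a2 - a1) (interp_err f1 (A s) (B s) th))
                          (scal (th * ((b2 - b1) - (a2 - a1))) (minus (f1 (B s)) (f1 (C s))))));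
    [lra | | |].
  - intros s Hs. destruct (Hrange s Hs) as ([HA HAC] & [HCB HB] & Hlen).
    apply (continuous_interp_err_moving f a1 b1 (a2 - a1) (b2 - b1) th s); apply Hc; unfold C, A, B in *; lra.
  - intros s Hs. destruct (Hrange s ltac:(lra)) as ([HA HAC] & [HCB HB] & Hlen).
    destruct (Hinner s Hs) as [HA' HB'].
    apply (is_derive_interp_err_moving f f1 a1 b1 (a2 - a1) (b2 - b1) th s);
      apply Hd1; unfold C, A, B in *; lra.
  - intros s Hs. destruct (Hrange s ltac:(lra)) as ([HA HAC] & [HCB HB] & Hlen).
    destruct (Hinner s Hs) as [HA' HB'].
    apply (interp_err_moving_derive_le f1 f2 f3 a1 b2); auto; lra.
Qed.

Lemma continuous_lin_interp a b (A B : V) s : continuous (lin_interp a b A B) s.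
Proof.
  unfold lin_interp.
  assert (C1 : continuous (fun t : R => (b - t) / (b - a)) s)
    by (apply continuous_R_of_derive; auto_derive; auto).
  assert (C2 : continuous (fun t : R => (t - a) / (b - a)) s)
    by (apply continuous_R_of_derive; auto_derive; auto).
  exact (continuous_plus _ _ s (continuous_scal_l _ A s C1) (continuous_scal_l _ B s C2)).
Qed.

Lemma lin_interp_defect_le f uh a b t :
  a < b -> a <= t <= b ->
  (forall t, a <= t <= b -> uh t = lin_interp a b (uh a) (uh b) t) ->
  norm (minus (f t) (uh t)) <= norm (minus (f a) (uh a)) + norm (minus (f b) (uh b))
                               + norm (interp_err f a b ((t - a) / (b - a))).
Proof.
  intros Hab Ht Hl.
  set (th := (t - a) / (b - a)).
  assert (Hth : 0 <= th <= 1).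
  { unfold th. split; [apply Rdiv_le_0_compat; lra|].
    apply (Rmult_le_reg_r (b - a)); [lra|]. unfold Rdiv. rewrite Rmult_assoc, Rinv_l; lra. }
  replace (minus (f t) (uh t)) with
    (minus (plus (scal (1 - th) (minus (f a) (uh a))) (scal th (minus (f b) (uh b))))
           (interp_err f a b th)).
  2: { rewrite (Hl t Ht). unfold interp_err, lin_interp.
       replace (a + th * (b - a)) with t by (unfold th; field; lra).
       lincomb_eq (f a) (f b) (uh a) (uh b) (f t) (@zero V); unfold th; field; lra. }
  eapply Rle_trans; [apply norm_minus_le|].
  apply Rplus_le_compat_r. eapply Rle_trans; [exact (norm_triangle _ _)|].
  assert (H1 := norm_scal_le (1 - th) (minus (f a) (uh a))).
  assert (H2 := norm_scal_le th (minus (f b) (uh b))).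
  rewrite Rabs_right in H1, H2 by lra.
  assert (0 <= norm (minus (f a) (uh a))) by apply norm_ge_0.
  assert (0 <= norm (minus (f b) (uh b))) by apply norm_ge_0.
  nra.
Qed.

End InterpErr.

Section Averages.
Context {V : CompleteNormedModule R_AbsRing}.

Lemma is_RInt_lin_interp a b (A B : V) :
  a < b -> is_RInt (lin_interp a b A B) a b (scal ((b - a) / 2) (plus A B)).
Proof.
  intros Hab.
  set (G := fun t => plus (scal (- (b - t) ^ 2 / (2 * (b - a))) A)
                          (scal ((t - a) ^ 2 / (2 * (b - a))) B)).
  replace (scal ((b - a) / 2) (plus A B)) with (minus (G b) (G a))
    by (unfold G; lincomb_eq A B (@zero V) (@zero V) (@zero V) (@zero V); field; lra).
  apply (is_RInt_derive G).
  - intros x _.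
    assert (D1 : is_derive (fun t : R => - (b - t) ^ 2 / (2 * (b - a))) x ((b - x) / (b - a)))
      by (auto_derive; [lra | field; lra]).
    assert (D2 : is_derive (fun t : R => (t - a) ^ 2 / (2 * (b - a))) x ((x - a) / (b - a)))
      by (auto_derive; [lra | field; lra]).
    exact (is_derive_plus _ _ x _ _ (is_derive_scal_l _ x _ A D1) (is_derive_scal_l _ x _ B D2)).
  - intros x _.
    assert (C1 : continuous (fun t : R => (b - t) / (b - a)) x)
      by (apply continuous_R_of_derive; auto_derive; lra).
    assert (C2 : continuous (fun t : R => (t - a) / (b - a)) x)
      by (apply continuous_R_of_derive; auto_derive; lra).
    exact (continuous_plus _ _ x (continuous_scal_l _ A x C1) (continuous_scal_l _ B x C2)).
Qed.

Lemma RInt_interp_err (f : R -> V) a b :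
  a < b -> (forall z, continuous f z) ->
  RInt (interp_err f a b) 0 1
  = minus (scal (1 / 2) (plus (f a) (f b))) (scal (/ (b - a)) (RInt f a b)).
Proof.
  intros Hab Hc.
  assert (Hlin : is_RInt (fun th => plus (scal (1 - th) (f a)) (scal th (f b))) 0 1
                         (scal (1 / 2) (plus (f a) (f b)))).
  { replace (scal (1 / 2) (plus (f a) (f b))) with (scal ((1 - 0) / 2) (plus (f a) (f b)))
      by (f_equal; field).
    apply (is_RInt_ext (lin_interp 0 1 (f a) (f b))); [|apply is_RInt_lin_interp; lra].
    intros th _. unfold lin_interp. f_equal; f_equal; field. }
  assert (Hpath : ex_RInt (fun th => f (a + th * (b - a))) 0 1).
  { apply ex_RInt_continuous. intros z _.
    apply (continuous_comp (fun th => a + th * (b - a)) f); [|apply Hc].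
    apply continuous_R_of_derive. auto_derive. auto. }
  transitivity (minus (RInt (fun th => plus (scal (1 - th) (f a)) (scal th (f b))) 0 1)
                      (RInt (fun th => f (a + th * (b - a))) 0 1)).
  { rewrite <- RInt_minus; [reflexivity | eexists; exact Hlin | exact Hpath]. }
  rewrite (is_RInt_unique _ _ _ _ Hlin). f_equal.
  (* substitute t = a + th (b - a) *)
  assert (Hcl := RInt_comp_lin f (b - a) a 0 1).
  replace ((b - a) * 0 + a) with a in Hcl by ring.
  replace ((b - a) * 1 + a) with b in Hcl by ring.
  rewrite <- Hcl by (apply ex_RInt_continuous; intros; apply Hc).
  rewrite RInt_scal.
  2: { apply (ex_RInt_ext (fun th => f (a + th * (b - a)))); [|exact Hpath].
       intros x _. f_equal. ring. }
  rewrite scal_assoc.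
  replace (mult (/ (b - a)) (b - a)) with 1 by (unfold mult; simpl; field; lra).
  rewrite (scal_one (V := V)). apply RInt_ext. intros x _. f_equal. ring.
Qed.

Lemma lin_interp_defect_step (f uh : R -> V) a b :
  a < b -> (forall z, continuous f z) ->
  (forall t, a <= t <= b -> uh t = lin_interp a b (uh a) (uh b) t) ->
  RInt uh a b = RInt f a b ->
  minus (f b) (uh b) = minus (scal 2 (RInt (interp_err f a b) 0 1)) (minus (f a) (uh a)).
Proof.
  intros Hab Hc Hl Hi.
  assert (Huh : RInt uh a b = scal ((b - a) / 2) (plus (uh a) (uh b))).
  { apply is_RInt_unique.
    apply (is_RInt_ext (lin_interp a b (uh a) (uh b))); [|apply is_RInt_lin_interp, Hab].
    intros t Ht. rewrite Rmin_left, Rmax_right in Ht by lra. symmetry. apply Hl. lra. }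
  rewrite (RInt_interp_err f a b Hab Hc), <- Hi, Huh.
  lincomb_eq (f a) (f b) (uh a) (uh b) (@zero V) (@zero V); field; lra.
Qed.

Lemma RInt_ext_on (f g : R -> V) a b :
  a <= b -> (forall x, a <= x <= b -> f x = g x) -> RInt f a b = RInt g a b.
Proof.
  intros Hab Hfg. apply RInt_ext. intros x Hx.
  rewrite Rmin_left, Rmax_right in Hx by exact Hab. apply Hfg. lra.
Qed.

Lemma norm_RInt_unit_le (h : R -> V) B :
  (forall th, continuous h th) -> (forall th, 0 <= th <= 1 -> norm (h th) <= B) ->
  norm (RInt h 0 1) <= B.
Proof.
  intros Hh HB.
  replace B with (scal (1 - 0) B) by (unfold scal; simpl; unfold mult; simpl; ring).
  apply (norm_RInt_le h (fun _ => B) 0 1); [lra | exact HB | |].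
  - apply RInt_correct, ex_RInt_continuous. intros; apply Hh.
  - exact (is_RInt_const (V := R_NormedModule) 0 1 B).
Qed.

End Averages.

(** * Real powers and the graded mesh *)

Lemma Rpower_pos x a : 0 < Rpower x a.
Proof. apply exp_pos. Qed.

Lemma Rpower_1_base a : Rpower 1 a = 1.
Proof. unfold Rpower. rewrite ln_1, Rmult_0_r, exp_0. reflexivity. Qed.

Lemma Rpower_le_one x a : 1 <= x -> a <= 0 -> Rpower x a <= 1.
Proof.
  intros Hx Ha. rewrite <- (Rpower_O x) by lra. apply Rle_Rpower; lra.
Qed.

Lemma Rpower_ge_one x a : 1 <= x -> 0 <= a -> 1 <= Rpower x a.
Proof.
  intros Hx Ha. rewrite <- (Rpower_O x) by lra. apply Rle_Rpower; lra.
Qed.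

Lemma Rpower_le_comparable w w' k a :
  0 < w -> 0 < w' -> w <= k * w' -> w' <= k * w ->
  Rpower w a <= Rpower k (Rabs a) * Rpower w' a.
Proof.
  intros Hw Hw' Hk1 Hk2.
  assert (Hk : 0 < k) by nra.
  unfold Rpower. rewrite <- exp_plus.
  cut (a * ln w <= Rabs a * ln k + a * ln w').
  { intros [Hlt|Heq]; [left; apply exp_increasing, Hlt | right; f_equal; exact Heq]. }
  assert (ln w <= ln k + ln w') by (rewrite <- ln_mult by lra; apply ln_le; lra).
  assert (ln w' <= ln k + ln w) by (rewrite <- ln_mult by lra; apply ln_le; lra).
  assert (a * (ln w - ln w') <= Rabs a * ln k).
  { eapply Rle_trans; [apply Rle_abs|]. rewrite Rabs_mult.
    apply Rmult_le_compat_l; [apply Rabs_pos | apply Rabs_le; lra]. }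
  lra.
Qed.

Lemma is_derive_Rpower x a :
  0 < x -> is_derive (fun y => Rpower y a) x (a * Rpower x (a - 1)).
Proof. intros Hx. apply is_derive_Reals, derivable_pt_lim_power, Hx. Qed.

Lemma continuity_pt_Rpower x a : 0 < x -> continuity_pt (fun y => Rpower y a) x.
Proof.
  intros Hx. apply derivable_continuous_pt. exists (a * Rpower x (a - 1)).
  apply derivable_pt_lim_power, Hx.
Qed.

Lemma Rpower_MVT x y a :
  0 < x -> x <= y ->
  exists xi, x <= xi <= y /\ Rpower y a - Rpower x a = a * Rpower xi (a - 1) * (y - x).
Proof.
  intros Hx Hxy.
  destruct (MVT_gen (fun z => Rpower z a) x y (fun z => a * Rpower z (a - 1))) as [c [Hc E]].
  - intros z Hz. rewrite Rmin_left in Hz by lra. apply is_derive_Rpower. lra.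
  - intros z Hz. rewrite Rmin_left in Hz by lra. apply continuity_pt_Rpower. lra.
  - rewrite Rmin_left, Rmax_right in Hc by lra. exists c. split; auto.
Qed.


Lemma Rpower_scale_split j tau a k :
  0 < j -> 0 < tau ->
  tau ^ k * Rpower (j * tau) (a - INR k) = Rpower j (a - INR k) * Rpower tau a.
Proof.
  intros Hj Ht. rewrite <- Rpower_mult_distr, <- (Rpower_pow k tau) by auto.
  replace (Rpower tau (INR k) * (Rpower j (a - INR k) * Rpower tau (a - INR k)))
    with (Rpower j (a - INR k) * (Rpower tau (INR k) * Rpower tau (a - INR k))) by ring.
  rewrite <- Rpower_plus. do 2 f_equal. ring.
Qed.

Lemma Rpower_second_diff_le X h g :
  1 <= g -> 0 < h <= X ->
  Rabs (Rpower (X + 2 * h) g - Rpower (X + h) g - (Rpower (X + h) g - Rpower X g))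
  <= g * (g - 1) * Rpower 3 (Rabs (g - 2)) * h ^ 2 * Rpower (X + 2 * h) (g - 2).
Proof.
  intros Hg Hh.
  set (D := fun x => Rpower (x + h) g - Rpower x g).
  set (dD := fun x => g * Rpower (x + h) (g - 1) - g * Rpower x (g - 1)).
  destruct (MVT_gen D X (X + h) dD) as [xi [Hxi E]].
  - intros z Hz. rewrite Rmin_left in Hz by lra.
    apply (is_derive_minus (fun x => Rpower (x + h) g) (fun x => Rpower x g));
      [|apply is_derive_Rpower; lra].
    replace (g * Rpower (z + h) (g - 1)) with (scal 1 (g * Rpower (z + h) (g - 1)))
      by (unfold scal; simpl; unfold mult; simpl; ring).
    apply (is_derive_comp (fun y => Rpower y g) (fun x => x + h));
      [apply is_derive_Rpower; lra | auto_derive; auto].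
  - intros z Hz. rewrite Rmin_left in Hz by lra. unfold D.
    apply continuity_pt_minus; [|apply continuity_pt_Rpower; lra].
    apply (continuity_pt_comp (fun x => x + h) (fun y => Rpower y g));
      [|apply continuity_pt_Rpower; lra].
    apply continuity_pt_plus; [apply continuity_pt_id | apply continuity_pt_const; intros ? ?; reflexivity].
  - rewrite Rmin_left, Rmax_right in Hxi by lra.
    unfold D, dD in E. replace (X + h + h) with (X + 2 * h) in E by ring.
    replace (X + h - X) with h in E by ring.
    destruct (Rpower_MVT xi (xi + h) (g - 1)) as [eta [Heta E2]]; try lra.
    replace (Rpower (X + 2 * h) g - Rpower (X + h) g - (Rpower (X + h) g - Rpower X g))
      with (g * (Rpower (xi + h) (g - 1) - Rpower xi (g - 1)) * h) by (rewrite E; ring).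
    rewrite E2. replace (xi + h - xi) with h by ring. replace (g - 1 - 1) with (g - 2) by ring.
    assert (Hc := Rpower_le_comparable eta (X + 2 * h) 3 (g - 2) ltac:(lra) ltac:(lra)
                     ltac:(lra) ltac:(lra)).
    assert (0 < Rpower eta (g - 2)) by apply Rpower_pos.
    assert (0 <= g * (g - 1)) by nra.
    assert (0 < h ^ 2) by (apply pow_lt; lra).
    replace (g * ((g - 1) * Rpower eta (g - 2) * h) * h)
      with ((g * (g - 1) * h ^ 2) * Rpower eta (g - 2)) by ring.
    rewrite Rabs_right by (apply Rle_ge; apply Rmult_le_pos; nra).
    replace (g * (g - 1) * Rpower 3 (Rabs (g - 2)) * h ^ 2 * Rpower (X + 2 * h) (g - 2))
      with ((g * (g - 1) * h ^ 2) * (Rpower 3 (Rabs (g - 2)) * Rpower (X + 2 * h) (g - 2))) by ring.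
    apply Rmult_le_compat_l; [nra | exact Hc].
Qed.

Section GradedMesh.
Variables (T g : R) (N : nat).
Hypotheses (HT : 0 < T) (Hg : 1 <= g) (HN : (1 <= N)%nat).

Local Notation tau := (mesh_tau T g N).

Lemma mesh_tau_pos : 0 < tau.
Proof. apply Rdiv_lt_0_compat; [apply Rpower_pos | apply lt_0_INR; lia]. Qed.

Lemma mesh_Rpower j : (1 <= j)%nat -> mesh T g N j = Rpower (INR j * tau) g.
Proof. intros H. destruct j; [lia | reflexivity]. Qed.

Lemma mesh_pos j : (1 <= j)%nat -> 0 < mesh T g N j.
Proof. intros H. rewrite mesh_Rpower by auto. apply Rpower_pos. Qed.

Lemma mesh_lt j k : (j < k)%nat -> mesh T g N j < mesh T g N k.
Proof.
  intros Hjk. assert (Ht := mesh_tau_pos).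
  destruct j; [apply mesh_pos; lia|].
  rewrite !mesh_Rpower by lia. apply Rlt_Rpower_l; [lra|]. split.
  - apply Rmult_lt_0_compat; [apply lt_0_INR; lia | exact Ht].
  - apply Rmult_lt_compat_r; [exact Ht | apply lt_INR; lia].
Qed.

Lemma mesh_le j k : (j <= k)%nat -> mesh T g N j <= mesh T g N k.
Proof.
  intros Hjk. destruct (Nat.eq_dec j k) as [->|]; [lra|]. left. apply mesh_lt. lia.
Qed.

Lemma mesh_nonneg j : 0 <= mesh T g N j.
Proof. destruct j; [simpl; lra | left; apply mesh_pos; lia]. Qed.

Lemma mesh_last : mesh T g N N = T.
Proof.
  rewrite mesh_Rpower by auto. unfold mesh_tau.
  replace (INR N * (Rpower T (/ g) / INR N)) with (Rpower T (/ g))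
    by (field; apply not_0_INR; lia).
  rewrite Rpower_mult. replace (/ g * g) with 1 by (field; lra). apply Rpower_1, HT.
Qed.

Lemma mesh_le_T j : (j <= N)%nat -> mesh T g N j <= T.
Proof. intros H. rewrite <- mesh_last at 2. apply mesh_le, H. Qed.

Lemma mesh_cell_in_domain n s :
  (1 <= n <= N)%nat -> mesh T g N (n - 1) <= s <= mesh T g N n -> 0 <= s <= T.
Proof.
  intros Hn Hs. pose proof (mesh_nonneg (n - 1)). pose proof (mesh_le_T n ltac:(lia)). lra.
Qed.

Lemma mesh_step j :
  (1 <= j)%nat ->
  mesh T g N j - mesh T g N (j - 1) <= g * tau * Rpower (INR j * tau) (g - 1).
Proof.
  intros Hj. assert (Ht := mesh_tau_pos).
  destruct (Nat.eq_dec j 1) as [->|Hj1].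
  - simpl (1 - 1)%nat. rewrite mesh_Rpower by lia. simpl (INR 1). rewrite Rmult_1_l.
    replace (Rpower tau g) with (Rpower tau (1 + (g - 1))) by (f_equal; ring).
    rewrite Rpower_plus, Rpower_1 by exact Ht. simpl mesh.
    assert (0 < Rpower tau (g - 1)) by apply Rpower_pos.
    assert (0 <= (g - 1) * (tau * Rpower tau (g - 1))) by (apply Rmult_le_pos; nra).
    nra.
  - rewrite !mesh_Rpower by lia. rewrite minus_INR by lia. simpl (INR 1).
    assert (HI : 1 <= INR j - 1).
    { assert (2 <= INR j) by (replace 2 with (INR 2) by (simpl; ring); apply le_INR; lia). lra. }
    destruct (Rpower_MVT ((INR j - 1) * tau) (INR j * tau) g) as [xi [Hxi E]];
      [apply Rmult_lt_0_compat; lra | nra |].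
    rewrite E. replace (INR j * tau - (INR j - 1) * tau) with tau by ring.
    assert (0 < (INR j - 1) * tau) by (apply Rmult_lt_0_compat; lra).
    assert (Rpower xi (g - 1) <= Rpower (INR j * tau) (g - 1)) by (apply Rle_Rpower_l; lra).
    replace (g * Rpower xi (g - 1) * tau) with ((g * tau) * Rpower xi (g - 1)) by ring.
    apply Rmult_le_compat_l; [nra | assumption].
Qed.

Lemma mesh_prev_step j :
  (2 <= j)%nat ->
  mesh T g N (j - 1) - mesh T g N (j - 2) <= g * tau * Rpower (INR j * tau) (g - 1).
Proof.
  intros Hj. assert (Ht := mesh_tau_pos).
  replace (j - 2)%nat with (j - 1 - 1)%nat by lia.
  eapply Rle_trans; [apply (mesh_step (j - 1)); lia|].
  apply Rmult_le_compat_l; [nra|]. apply Rle_Rpower_l; [lra|].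
  split; [apply Rmult_lt_0_compat; [apply lt_0_INR; lia | lra]|].
  apply Rmult_le_compat_r; [lra | apply le_INR; lia].
Qed.

Lemma mesh_ratio i j :
  (1 <= i)%nat -> (j <= 3 * i)%nat -> mesh T g N j <= Rpower 3 g * mesh T g N i.
Proof.
  intros Hi Hj. assert (Ht := mesh_tau_pos).
  assert (0 < Rpower 3 g * mesh T g N i) by (apply Rmult_lt_0_compat; [apply Rpower_pos | apply mesh_pos, Hi]).
  destruct j; [simpl; lra|].
  rewrite !mesh_Rpower, Rpower_mult_distr by (lia || lra || (apply Rmult_lt_0_compat; [apply lt_0_INR; lia | lra])).
  apply Rle_Rpower_l; [lra|]. split; [apply Rmult_lt_0_compat; [apply lt_0_INR; lia | lra]|].
  assert (INR (S j) <= 3 * INR i).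
  { replace 3 with (INR 3) by (simpl; ring). rewrite <- mult_INR. apply le_INR. lia. }
  nra.
Qed.


Lemma mesh_second_diff j :
  (3 <= j)%nat ->
  Rabs ((mesh T g N j - mesh T g N (j - 1)) - (mesh T g N (j - 1) - mesh T g N (j - 2)))
  <= g * (g - 1) * Rpower 3 (Rabs (g - 2)) * tau ^ 2 * Rpower (INR j * tau) (g - 2).
Proof.
  intros Hj. assert (Ht := mesh_tau_pos).
  assert (HJ : 3 <= INR j) by (replace 3 with (INR 3) by (simpl; ring); apply le_INR; lia).
  rewrite !mesh_Rpower by lia. rewrite !minus_INR by lia. simpl (INR 1). simpl (INR 2).
  replace ((INR j - 1) * tau) with ((INR j - (1 + 1)) * tau + tau) by ring.
  replace (INR j * tau) with ((INR j - (1 + 1)) * tau + 2 * tau) by ring.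
  apply Rpower_second_diff_le; [exact Hg | split; [exact Ht | nra]].
Qed.

End GradedMesh.

(* The factors [Rpower 3 g] bound ratios of mesh points up to three cells apart ([mesh_ratio]). *)
Definition interp_const (sigma g Cu : R) : R :=
  2 * (Cu / sigma) + Cu * Rpower (Rpower 3 g) (Rabs (sigma - 2)) * g ^ 2.

Definition interp_diff_const (sigma g Cu : R) : R :=
  Cu * (Rpower (Rpower 3 g) (Rabs (sigma - 3)) * g ^ 3
        + g * (g - 1) * Rpower 3 (Rabs (g - 2)) * Rpower (Rpower 3 g) (Rabs (sigma - 2)) * g).

Lemma interp_const_nonneg sigma g Cu : 0 < sigma -> 0 <= g -> 0 <= Cu -> 0 <= interp_const sigma g Cu.
Proof.
  intros Hs Hg HCu. unfold interp_const.
  assert (0 <= Cu / sigma) by (apply Rdiv_le_0_compat; lra).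
  assert (0 < Rpower (Rpower 3 g) (Rabs (sigma - 2))) by apply Rpower_pos.
  assert (0 <= g ^ 2) by (apply pow_le; lra).
  assert (0 <= Cu * Rpower (Rpower 3 g) (Rabs (sigma - 2)) * g ^ 2) by (apply Rmult_le_pos; nra).
  lra.
Qed.

Lemma interp_diff_const_nonneg sigma g Cu : 1 <= g -> 0 <= Cu -> 0 <= interp_diff_const sigma g Cu.
Proof.
  intros Hg HCu. unfold interp_diff_const. apply Rmult_le_pos; [lra|].
  assert (0 < Rpower (Rpower 3 g) (Rabs (sigma - 3))) by apply Rpower_pos.
  assert (0 < Rpower (Rpower 3 g) (Rabs (sigma - 2))) by apply Rpower_pos.
  assert (0 < Rpower 3 (Rabs (g - 2))) by apply Rpower_pos.
  assert (0 <= g ^ 3) by (apply pow_le; lra).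
  assert (0 <= g * (g - 1)) by nra.
  assert (0 <= g * (g - 1) * Rpower 3 (Rabs (g - 2)) * Rpower (Rpower 3 g) (Rabs (sigma - 2)) * g)
    by (repeat apply Rmult_le_pos; nra).
  nra.
Qed.

Section LocalErrors.
Variables (V : NormedModule R_AbsRing) (T sigma g Cu : R) (f f1 f2 f3 : R -> V) (N : nat).
Hypotheses (HT : 0 < T) (Hsigma : 0 < sigma) (Hg : 1 <= g) (HCu : 0 <= Cu) (HN : (1 <= N)%nat).
Hypothesis Hf : forall z, continuous f z.
Hypothesis Hf1 : forall z, 0 < z < T -> is_derive f z (f1 z).
Hypothesis Hf2 : forall z, 0 < z < T -> is_derive f1 z (f2 z).
Hypothesis Hf3 : forall z, 0 < z < T -> is_derive f2 z (f3 z).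
Hypothesis Hb1 : forall z, 0 < z < T -> norm (f1 z) <= Cu * Rpower z (sigma - 1).
Hypothesis Hb2 : forall z, 0 < z < T -> norm (f2 z) <= Cu * Rpower z (sigma - 2).
Hypothesis Hb3 : forall z, 0 < z < T -> norm (f3 z) <= Cu * Rpower z (sigma - 3).

Local Notation tau := (mesh_tau T g N).
Local Notation t := (mesh T g N).

Lemma increment_from_origin_le y :
  0 < y <= T -> norm (minus (f y) (f 0)) <= Cu / sigma * Rpower y sigma.
Proof.
  intros Hy.
  apply (le_at_right_limit (fun w => norm (minus (f y) (f w))) (fun _ => Cu / sigma * Rpower y sigma)).
  - apply (continuous_comp (fun w => minus (f y) (f w)) norm); [|apply filterlim_norm].
    apply (continuous_minus (fun _ => f y) f); [apply continuous_const | apply Hf].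
  - apply continuous_const.
  - assert (Hy0 : 0 < y) by lra.
    exists (mkposreal y Hy0). intros w Hw Hw0. cbv beta in Hw0.
    change (Rabs (w - 0) < y) in Hw. rewrite Rminus_0_r, Rabs_right in Hw by lra.
    assert (0 <= Cu / sigma * Rpower w sigma)
      by (apply Rmult_le_pos; [apply Rdiv_le_0_compat; lra | left; apply Rpower_pos]).
    apply Rle_trans with (Cu / sigma * Rpower y sigma - Cu / sigma * Rpower w sigma); [|lra].
    apply (mean_value_ineq f f1 (fun z => Cu / sigma * Rpower z sigma)
             (fun z => Cu * Rpower z (sigma - 1))); [lra | intros; apply Hf | | | |].
    + intros z Hz. apply continuity_pt_filterlim.
      apply continuity_pt_scal, continuity_pt_Rpower. lra.
    + intros z Hz. apply Hf1. lra.
    + intros z Hz.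
      replace (Cu * Rpower z (sigma - 1)) with (Cu / sigma * (sigma * Rpower z (sigma - 1)))
        by (field; lra).
      apply is_derive_scal, is_derive_Rpower. lra.
    + intros z Hz. apply Hb1. lra.
Qed.

Lemma interp_err_first_le th :
  0 <= th <= 1 ->
  norm (interp_err f 0 (t 1) th) <= 2 * (Cu / sigma) * Rpower tau (g * sigma).
Proof.
  intros Hth.
  assert (Ht1 : 0 < t 1) by (apply mesh_pos; lia).
  assert (Ht1T : t 1 <= T) by (apply mesh_le_T; auto; lra).
  set (X := Cu / sigma * Rpower (t 1) sigma).
  assert (HX0 : 0 <= X)
    by (apply Rmult_le_pos; [apply Rdiv_le_0_compat; lra | left; apply Rpower_pos]).
  assert (HX : forall y, 0 <= y <= t 1 -> norm (minus (f y) (f 0)) <= X).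
  { intros y Hy. destruct (Req_dec y 0) as [->|Hy0]; [rewrite norm_minus_diag; exact HX0|].
    eapply Rle_trans; [apply increment_from_origin_le; lra|].
    apply Rmult_le_compat_l; [apply Rdiv_le_0_compat; lra | apply Rle_Rpower_l; lra]. }
  replace (2 * (Cu / sigma) * Rpower tau (g * sigma)) with (2 * X).
  2: { unfold X. rewrite mesh_Rpower, Rpower_mult by lia. simpl (INR 1). rewrite Rmult_1_l. ring. }
  eapply Rle_trans; [apply interp_err_le_oscillation, Hth|].
  set (c := 0 + th * (t 1 - 0)).
  assert (Hc : 0 <= c <= t 1) by (unfold c; split; nra).
  assert (N1 : norm (minus (f 0) (f c)) <= X) by (rewrite norm_minus_comm; apply HX, Hc).
  assert (N2 : norm (minus (f (t 1)) (f c)) <= 2 * X).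
  { eapply Rle_trans; [apply (norm_minus_triangle (f (t 1)) (f 0) (f c))|].
    assert (norm (minus (f (t 1)) (f 0)) <= X) by (apply HX; lra). lra. }
  apply Rle_trans with ((1 - th) * X + th * (2 * X)); [|nra].
  apply Rplus_le_compat; apply Rmult_le_compat_l; lra.
Qed.

Lemma Rpower_mesh_comparable i j z a :
  (1 <= i)%nat -> (j <= 3 * i)%nat -> t i < z < t j ->
  Rpower z a <= Rpower (Rpower 3 g) (Rabs a) * Rpower (t j) a.
Proof.
  intros Hi Hj Hz.
  assert (Hti : 0 < t i) by (apply mesh_pos; auto).
  assert (Hratio := mesh_ratio T g N Hg HN i j Hi Hj).
  assert (1 <= Rpower 3 g) by (apply Rpower_ge_one; lra).
  apply Rpower_le_comparable; nra.
Qed.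

Lemma interp_err_mesh_le j th :
  (2 <= j <= N)%nat -> 0 <= th <= 1 ->
  norm (interp_err f (t (j - 1)) (t j) th)
  <= Cu * Rpower (Rpower 3 g) (Rabs (sigma - 2)) * g ^ 2
     * (Rpower (INR j) (g * sigma - 2) * Rpower tau (g * sigma)).
Proof.
  intros Hj Hth.
  assert (Ha : 0 < t (j - 1)) by (apply mesh_pos; lia).
  assert (Hab : t (j - 1) < t j) by (apply mesh_lt; auto; lia).
  assert (HbT : t j <= T) by (apply mesh_le_T; auto; lia).
  set (K := Rpower (Rpower 3 g) (Rabs (sigma - 2))).
  set (M := Cu * K * Rpower (t j) (sigma - 2)).
  assert (HM : 0 <= M) by
    (unfold M, K; apply Rmult_le_pos; [apply Rmult_le_pos; [lra | left; apply Rpower_pos] | left; apply Rpower_pos]).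
  eapply Rle_trans.
  { apply (interp_err_le_second_deriv f f1 f2 (t (j - 1)) (t j) M th); auto;
      intros z Hz; [apply Hf1 | apply Hf2 | ]; try lra.
    eapply Rle_trans; [apply Hb2; lra|]. unfold M. rewrite Rmult_assoc.
    apply Rmult_le_compat_l; [lra|]. apply (Rpower_mesh_comparable (j - 1)); [lia | lia | exact Hz]. }
  assert (Hst := mesh_step T g N Hg HN j ltac:(lia)).
  apply Rle_trans with (M * (g * tau * Rpower (INR j * tau) (g - 1)) ^ 2).
  { apply Rmult_le_compat_l; [exact HM | apply pow_incr; lra]. }
  assert (Htau := mesh_tau_pos T g N HN).
  assert (Hjp : 0 < INR j) by (apply lt_0_INR; lia).
  right. unfold M. rewrite mesh_Rpower, Rpower_mult by lia.
  replace (g * sigma - 2) with (g * sigma - INR 2) by (simpl; ring).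
  rewrite <- (Rpower_scale_split (INR j) tau (g * sigma) 2) by lra.
  replace (g * sigma - INR 2) with (g * (sigma - 2) + (g - 1) + (g - 1)) by (simpl; ring).
  rewrite !Rpower_plus. ring.
Qed.

Lemma mesh_diff_bound_identity j :
  (1 <= j)%nat ->
  g * tau * Rpower (INR j * tau) (g - 1)
    * (Cu * Rpower (Rpower 3 g) (Rabs (sigma - 3)) * Rpower (t j) (sigma - 3))
    * (g * tau * Rpower (INR j * tau) (g - 1)) ^ 2
  + g * (g - 1) * Rpower 3 (Rabs (g - 2)) * tau ^ 2 * Rpower (INR j * tau) (g - 2)
    * (Cu * Rpower (Rpower 3 g) (Rabs (sigma - 2)) * Rpower (t j) (sigma - 2))
    * (g * tau * Rpower (INR j * tau) (g - 1))
  = interp_diff_const sigma g Cu * (Rpower (INR j) (g * sigma - 3) * Rpower tau (g * sigma)).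
Proof.
  intros Hj. assert (Htau := mesh_tau_pos T g N HN).
  assert (Hjp : 0 < INR j) by (apply lt_0_INR; lia).
  assert (HtP : forall a, Rpower (t j) a = Rpower (INR j * tau) (g * a))
    by (intros a; rewrite mesh_Rpower, Rpower_mult by lia; reflexivity).
  unfold interp_diff_const. rewrite !HtP.
  replace (g * sigma - 3) with (g * sigma - INR 3) by (simpl; ring).
  rewrite <- (Rpower_scale_split (INR j) tau (g * sigma) 3) by lra.
  set (x := INR j * tau).
  assert (E3 : Rpower x (g * sigma - INR 3)
               = Rpower x (g - 1) * Rpower x (g - 1) * Rpower x (g - 1) * Rpower x (g * (sigma - 3)))
    by (rewrite <- !Rpower_plus; f_equal; simpl (INR 3); ring).
  assert (E2 : Rpower x (g * sigma - INR 3)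
               = Rpower x (g - 2) * Rpower x (g * (sigma - 2)) * Rpower x (g - 1))
    by (rewrite <- !Rpower_plus; f_equal; simpl (INR 3); ring).
  transitivity (Cu * Rpower (Rpower 3 g) (Rabs (sigma - 3)) * g ^ 3 * (tau ^ 3 * Rpower x (g * sigma - INR 3))
    + Cu * g * (g - 1) * Rpower 3 (Rabs (g - 2)) * Rpower (Rpower 3 g) (Rabs (sigma - 2)) * g
      * (tau ^ 3 * Rpower x (g * sigma - INR 3))); [|ring].
  rewrite E3 at 1. rewrite E2. ring.
Qed.

Lemma interp_err_mesh_diff_le j th :
  (3 <= j <= N)%nat -> 0 <= th <= 1 ->
  norm (minus (interp_err f (t (j - 1)) (t j) th) (interp_err f (t (j - 2)) (t (j - 1)) th))
  <= interp_diff_const sigma g Cu * (Rpower (INR j) (g * sigma - 3) * Rpower tau (g * sigma)).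
Proof.
  intros Hj Hth.
  assert (Ha1 : 0 < t (j - 2)) by (apply mesh_pos; auto; lia).
  assert (H12 : t (j - 2) < t (j - 1)) by (apply mesh_lt; auto; lia).
  assert (H23 : t (j - 1) < t j) by (apply mesh_lt; auto; lia).
  assert (HbT : t j <= T) by (apply mesh_le_T; auto; lia).
  set (h := g * tau * Rpower (INR j * tau) (g - 1)).
  assert (Hh : 0 <= h)
    by (unfold h; apply Rmult_le_pos; [apply Rmult_le_pos; [lra | left; apply mesh_tau_pos; auto] | left; apply Rpower_pos]).
  set (M k := Cu * Rpower (Rpower 3 g) (Rabs (sigma - k)) * Rpower (t j) (sigma - k)).
  assert (HM : forall k, 0 <= M k)
    by (intros k; unfold M; apply Rmult_le_pos; [apply Rmult_le_pos; [lra | left; apply Rpower_pos] | left; apply Rpower_pos]).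
  assert (HMb : forall k z, t (j - 2) < z < t j -> Cu * Rpower z (sigma - k) <= M k).
  { intros k z Hz. unfold M. rewrite Rmult_assoc. apply Rmult_le_compat_l; [lra|].
    apply (Rpower_mesh_comparable (j - 2)); [lia | lia | exact Hz]. }
  eapply Rle_trans.
  { apply (interp_err_shift_le f f1 f2 f3 (t (j - 2)) (t (j - 1)) (t (j - 1)) (t j) (M 2) (M 3) h th);
      try lra.
    - exact (mesh_prev_step T g N Hg HN j ltac:(lia)).
    - exact (mesh_step T g N Hg HN j ltac:(lia)).
    - intros z Hz. apply Hf.
    - intros z Hz. apply Hf1. lra.
    - intros z Hz. apply Hf2. lra.
    - intros z Hz. apply Hf3. lra.
    - intros z Hz. eapply Rle_trans; [apply Hb2; lra | apply HMb, Hz].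
    - intros z Hz. eapply Rle_trans; [apply Hb3; lra | apply HMb, Hz]. }
  rewrite <- (mesh_diff_bound_identity j) by lia. fold h.
  apply Rplus_le_compat.
  - apply Rmult_le_compat_r; [apply pow_le; lra|].
    apply Rmult_le_compat_r; [apply HM | exact (mesh_prev_step T g N Hg HN j ltac:(lia))].
  - apply Rmult_le_compat_r; [lra|]. apply Rmult_le_compat_r; [apply HM|].
    exact (mesh_second_diff T g N Hg HN j ltac:(lia)).
Qed.

Lemma interp_err_node_le m th :
  (1 <= m <= N)%nat -> 0 <= th <= 1 ->
  norm (interp_err f (t (m - 1)) (t m) th)
  <= interp_const sigma g Cu * (Rpower (INR m) (g * sigma - 2) * Rpower tau (g * sigma)).
Proof.
  intros Hm Hth. unfold interp_const.
  assert (0 < Rpower (Rpower 3 g) (Rabs (sigma - 2))) by apply Rpower_pos.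
  assert (0 <= Cu / sigma) by (apply Rdiv_le_0_compat; lra).
  assert (0 < Rpower tau (g * sigma)) by apply Rpower_pos.
  destruct (Nat.eq_dec m 1) as [->|Hm1].
  - eapply Rle_trans; [apply interp_err_first_le, Hth|].
    simpl (INR 1). rewrite Rpower_1_base, Rmult_1_l.
    assert (0 <= Cu * Rpower (Rpower 3 g) (Rabs (sigma - 2)) * g ^ 2 * Rpower tau (g * sigma))
      by (repeat apply Rmult_le_pos; try lra; apply pow_le; lra).
    lra.
  - eapply Rle_trans; [apply interp_err_mesh_le; [lia | exact Hth]|].
    assert (0 < Rpower (INR m) (g * sigma - 2)) by apply Rpower_pos.
    rewrite Rmult_plus_distr_r.
    assert (0 <= 2 * (Cu / sigma) * (Rpower (INR m) (g * sigma - 2) * Rpower tau (g * sigma)))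
      by (apply Rmult_le_pos; [lra | apply Rmult_le_pos; lra]).
    lra.
Qed.

End LocalErrors.

(** * The nodal error recursion *)

Lemma le_telescope (x y : nat -> R) m n :
  (m <= n)%nat -> (forall k, (m < k <= n)%nat -> x k - x (k - 1)%nat <= y k - y (k - 1)%nat) ->
  x n - x m <= y n - y m.
Proof.
  intros Hmn Hstep. induction n as [|n IH].
  - replace m with 0%nat by lia. lra.
  - destruct (Nat.eq_dec m (S n)) as [->|Hm]; [lra|].
    assert (IH' := IH ltac:(lia) (fun k Hk => Hstep k ltac:(lia))).
    assert (H := Hstep (S n) ltac:(lia)). replace (S n - 1)%nat with n in H by lia. lra.
Qed.

Section NodalError.
Variables (V : CompleteNormedModule R_AbsRing) (T sigma g Cu : R) (f f1 f2 f3 uh : R -> V).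
Variables (N : nat) (G : nat -> R).
Local Notation tau := (mesh_tau T g N).
Local Notation t := (mesh T g N).
Hypotheses (HT : 0 < T) (Hsigma : 0 < sigma) (Hg : 1 <= g) (HCu : 0 <= Cu) (HN : (1 <= N)%nat).
Hypothesis Hf : forall z, continuous f z.
Hypothesis Hf1 : forall z, 0 < z < T -> is_derive f z (f1 z).
Hypothesis Hf2 : forall z, 0 < z < T -> is_derive f1 z (f2 z).
Hypothesis Hf3 : forall z, 0 < z < T -> is_derive f2 z (f3 z).
Hypothesis Hb1 : forall z, 0 < z < T -> norm (f1 z) <= Cu * Rpower z (sigma - 1).
Hypothesis Hb2 : forall z, 0 < z < T -> norm (f2 z) <= Cu * Rpower z (sigma - 2).
Hypothesis Hb3 : forall z, 0 < z < T -> norm (f3 z) <= Cu * Rpower z (sigma - 3).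
Hypothesis Huh0 : uh 0 = f 0.
Hypothesis Hlin : forall n s, (1 <= n <= N)%nat -> t (n - 1) <= s <= t n ->
  uh s = lin_interp (t (n - 1)) (t n) (uh (t (n - 1))) (uh (t n)) s.
Hypothesis Havg : forall n, (1 <= n <= N)%nat -> RInt uh (t (n - 1)) (t n) = RInt f (t (n - 1)) (t n).
Hypothesis HG : forall m, (2 <= m)%nat -> Rpower (INR m) (g * sigma - 3) <= G m - G (m - 1).

Let psi (m : nat) := minus (f (t m)) (uh (t m)).
(* [E m] is (f (t (m - 1)) + f (t m)) / 2 minus the mean of [f] over the m-th cell; see [RInt_interp_err]. *)
Let E (m : nat) := RInt (interp_err f (t (m - 1)) (t m)) 0 1.
Let cA := interp_const sigma g Cu.
Let cB := interp_diff_const sigma g Cu.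
Let k2 := 2 + Rpower 2 (Rabs (g * sigma - 2)).
Local Notation taup := (Rpower tau (g * sigma)).

Lemma avg_err_le m :
  (1 <= m <= N)%nat -> norm (E m) <= cA * (Rpower (INR m) (g * sigma - 2) * taup).
Proof.
  intros Hm. apply norm_RInt_unit_le.
  - intros th. exact (continuous_interp_err f _ _ th Hf).
  - intros th Hth. eapply interp_err_node_le; eauto.
Qed.

Lemma avg_err_diff_le m :
  (3 <= m <= N)%nat ->
  norm (minus (E m) (E (m - 1))) <= cB * (Rpower (INR m) (g * sigma - 3) * taup).
Proof.
  intros Hm. unfold E. replace (m - 1 - 1)%nat with (m - 2)%nat by lia.
  rewrite <- RInt_minus by (apply ex_RInt_continuous; intros th _; exact (continuous_interp_err f _ _ th Hf)).
  apply norm_RInt_unit_le.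
  - intros th. exact (continuous_minus _ _ th (continuous_interp_err f _ _ th Hf)
                                              (continuous_interp_err f _ _ th Hf)).
  - intros th Hth. eapply interp_err_mesh_diff_le; eauto.
Qed.

Lemma nodal_recursion m :
  (1 <= m <= N)%nat -> psi m = minus (scal 2 (E m)) (psi (m - 1)).
Proof.
  intros Hm. apply lin_interp_defect_step;
    [apply mesh_lt; auto; lia | exact Hf | intros s Hs; apply Hlin; auto | apply Havg; auto].
Qed.

Lemma G_nondecreasing m n : (1 <= m <= n)%nat -> G m <= G n.
Proof.
  intros Hmn.
  assert (H := le_telescope (fun _ => 0) G m n ltac:(lia)). cbv beta in H.
  enough (0 - 0 <= G n - G m) by lra. apply H. intros k Hk.
  assert (Hpow := HG k ltac:(lia)). assert (0 < Rpower (INR k) (g * sigma - 3)) by apply Rpower_pos.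
  lra.
Qed.

Lemma nodal_defect_step j :
  (2 <= j <= N)%nat ->
  norm (minus (psi j) (E j))
  <= norm (minus (E j) (E (j - 1))) + norm (minus (psi (j - 1)) (E (j - 1))).
Proof. intros Hj. exact (norm_reflection_le _ _ _ _ (nodal_recursion j ltac:(lia))). Qed.

Lemma nodal_defect_first : norm (minus (psi 1) (E 1)) <= cA * taup.
Proof.
  assert (Hpsi0 : norm (psi 0) = 0)
    by (unfold psi; simpl mesh; rewrite Huh0; exact (norm_minus_diag (f 0))).
  assert (HE1 : norm (E 1) <= cA * taup).
  { assert (H := avg_err_le 1 ltac:(lia)). simpl (INR 1) in H.
    rewrite Rpower_1_base, Rmult_1_l in H. exact H. }
  assert (H := norm_reflection_le _ _ _ (psi 0) (nodal_recursion 1 ltac:(lia))).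
  simpl (1 - 1)%nat in H. rewrite norm_minus_diag in H.
  eapply Rle_trans; [exact H|]. rewrite Rplus_0_r.
  eapply Rle_trans; [exact (norm_minus_le (E 1) (psi 0))|]. rewrite Hpsi0. lra.
Qed.

Lemma nodal_defect_second : (2 <= N)%nat -> norm (minus (psi 2) (E 2)) <= cA * k2 * taup.
Proof.
  intros HN2.
  assert (Htaup : 0 < taup) by apply Rpower_pos.
  assert (HcA : 0 <= cA) by (apply interp_const_nonneg; lra).
  assert (HE1 : norm (E 1) <= cA * taup).
  { assert (H := avg_err_le 1 ltac:(lia)). simpl (INR 1) in H.
    rewrite Rpower_1_base, Rmult_1_l in H. exact H. }
  assert (HE2 : norm (E 2) <= cA * Rpower 2 (g * sigma - 2) * taup).
  { assert (H := avg_err_le 2 ltac:(lia)). simpl (INR 2) in H.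
    replace (1 + 1) with 2 in H by ring. rewrite <- Rmult_assoc in H. exact H. }
  assert (Hk2 : cA * (2 + Rpower 2 (g * sigma - 2)) * taup <= cA * k2 * taup).
  { apply Rmult_le_compat_r; [lra|]. apply Rmult_le_compat_l; [lra|].
    apply Rplus_le_compat_l, Rle_Rpower; [lra | apply Rle_abs]. }
  pose proof nodal_defect_first.
  eapply Rle_trans; [exact (nodal_defect_step 2%nat ltac:(lia))|]. simpl (2 - 1)%nat.
  eapply Rle_trans; [apply Rplus_le_compat_r; exact (norm_minus_le (E 2) (E 1))|].
  lra.
Qed.

Lemma nodal_defect_le m :
  (1 <= m <= N)%nat -> norm (minus (psi m) (E m)) <= taup * (cA * k2 + cB * (G m - G 1)).
Proof.
  intros Hm.
  assert (Htaup : 0 < taup) by apply Rpower_pos.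
  assert (HcA : 0 <= cA) by (apply interp_const_nonneg; lra).
  assert (HcB : 0 <= cB) by (apply interp_diff_const_nonneg; lra).
  assert (Hk2 : 1 <= k2) by (unfold k2; pose proof (Rpower_pos 2 (Rabs (g * sigma - 2))); lra).
  assert (0 <= cA * (k2 - 1) * taup) by (apply Rmult_le_pos; [apply Rmult_le_pos|]; lra).
  pose proof nodal_defect_first.
  destruct (Nat.eq_dec m 1) as [->|Hm1]; [lra|].
  pose proof (nodal_defect_second ltac:(lia)).
  assert (HG12 := G_nondecreasing 1 2 ltac:(lia)).
  assert (0 <= taup * (cB * (G 2 - G 1))) by (apply Rmult_le_pos; [lra | apply Rmult_le_pos; lra]).
  (* [avg_err_diff_le] needs both cells away from the singularity at 0, hence telescoping from 2 *)
  assert (Htele : norm (minus (psi m) (E m)) - norm (minus (psi 2) (E 2))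
                  <= taup * cB * G m - taup * cB * G 2).
  { apply (le_telescope (fun j => norm (minus (psi j) (E j))) (fun j => taup * cB * G j)); [lia|].
    intros j Hj.
    assert (Hs := nodal_defect_step j ltac:(lia)).
    assert (HD := avg_err_diff_le j ltac:(lia)).
    assert (cB * Rpower (INR j) (g * sigma - 3) * taup <= cB * (G j - G (j - 1)%nat) * taup)
      by (apply Rmult_le_compat_r; [lra | apply Rmult_le_compat_l; [lra | apply HG; lia]]).
    lra. }
  nra.
Qed.

Lemma nodal_error_le m :
  (1 <= m <= N)%nat ->
  norm (psi m) <= taup * (cA * k2 + cB * (G m - G 1))
                  + cA * (Rpower (INR m) (g * sigma - 2) * taup).
Proof.
  intros Hm. eapply Rle_trans; [exact (norm_le_minus_add (psi m) (E m))|].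
  apply Rplus_le_compat; [apply nodal_defect_le | apply avg_err_le]; exact Hm.
Qed.

Lemma nodal_error_prev_le n :
  (1 <= n <= N)%nat ->
  norm (psi (n - 1)) <= taup * (cA * k2 + cB * (G n - G 1))
                        + cA * (Rpower 2 (Rabs (g * sigma - 2)) * Rpower (INR n) (g * sigma - 2) * taup).
Proof.
  intros Hn.
  assert (Htaup : 0 < taup) by apply Rpower_pos.
  assert (HcA : 0 <= cA) by (apply interp_const_nonneg; lra).
  assert (HcB : 0 <= cB) by (apply interp_diff_const_nonneg; lra).
  assert (HGn : G 1 <= G n) by (apply G_nondecreasing; lia).
  assert (0 <= cA * (Rpower 2 (Rabs (g * sigma - 2)) * Rpower (INR n) (g * sigma - 2) * taup))
    by (apply Rmult_le_pos; [lra | apply Rmult_le_pos; [apply Rmult_le_pos; left; apply Rpower_pos | lra]]).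
  destruct (Nat.eq_dec n 1) as [->|Hn1].
  - simpl (1 - 1)%nat. unfold psi. simpl mesh. rewrite Huh0, (norm_minus_diag (V := V)).
    assert (0 <= taup * (cA * k2 + cB * (G 1 - G 1)))
      by (unfold k2; pose proof (Rpower_pos 2 (Rabs (g * sigma - 2))); apply Rmult_le_pos; nra).
    lra.
  - eapply Rle_trans; [apply nodal_error_le; lia|].
    assert (G (n - 1)%nat <= G n) by (apply G_nondecreasing; lia).
    assert (Hcmp : Rpower (INR (n - 1)) (g * sigma - 2)
                   <= Rpower 2 (Rabs (g * sigma - 2)) * Rpower (INR n) (g * sigma - 2)).
    { rewrite minus_INR by lia. simpl (INR 1).
      assert (2 <= INR n) by (replace 2 with (INR 2) by (simpl; ring); apply le_INR; lia).
      apply Rpower_le_comparable; lra. }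
    assert (cB * (G (n - 1)%nat - G 1) <= cB * (G n - G 1)) by (apply Rmult_le_compat_l; lra).
    assert (cA * (Rpower (INR (n - 1)) (g * sigma - 2) * taup)
            <= cA * (Rpower 2 (Rabs (g * sigma - 2)) * Rpower (INR n) (g * sigma - 2) * taup))
      by (apply Rmult_le_compat_l; [lra | apply Rmult_le_compat_r; lra]).
    nra.
Qed.

Lemma interior_error_le n s :
  (1 <= n <= N)%nat -> t (n - 1) <= s <= t n ->
  norm (minus (f s) (uh s))
  <= taup * (2 * cA * k2 + 2 * cB * (G n - G 1) + cA * k2 * Rpower (INR n) (g * sigma - 2)).
Proof.
  intros Hn Hs.
  assert (Hab : t (n - 1) < t n) by (apply mesh_lt; auto; lia).
  assert (Hth : 0 <= (s - t (n - 1)) / (t n - t (n - 1)) <= 1).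
  { split; [apply Rdiv_le_0_compat; lra|].
    apply (Rmult_le_reg_r (t n - t (n - 1))); [lra|].
    unfold Rdiv. rewrite Rmult_assoc, Rinv_l; lra. }
  assert (Hloc : norm (interp_err f (t (n - 1)) (t n) ((s - t (n - 1)) / (t n - t (n - 1))))
                 <= cA * (Rpower (INR n) (g * sigma - 2) * taup)) by (eapply interp_err_node_le; eauto).
  eapply Rle_trans; [exact (lin_interp_defect_le f uh _ _ s Hab Hs (fun s' Hs' => Hlin n s' Hn Hs'))|].
  eapply Rle_trans.
  { apply Rplus_le_compat; [apply Rplus_le_compat|];
      [exact (nodal_error_prev_le n Hn) | exact (nodal_error_le n Hn) | exact Hloc]. }
  unfold k2. lra.
Qed.

End NodalError.

Definition power_sum_majorant (p : R) (m : nat) : R :=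
  if Req_EM_T p 2 then ln (INR m)
  else Rpower 2 (Rabs (p - 3)) * Rpower (INR m) (p - 2) / (p - 2).

Lemma power_sum_majorant_incr p m :
  (2 <= m)%nat ->
  Rpower (INR m) (p - 3) <= power_sum_majorant p m - power_sum_majorant p (m - 1).
Proof.
  intros Hm. unfold power_sum_majorant. rewrite minus_INR by lia. simpl (INR 1).
  assert (H2 : 2 <= INR m) by (replace 2 with (INR 2) by (simpl; ring); apply le_INR; lia).
  destruct (Req_EM_T p 2) as [->|Hp].
  - replace (2 - 3) with (Ropp 1) by ring. rewrite Rpower_Ropp, Rpower_1 by lra.
    destruct (MVT_gen ln (INR m - 1) (INR m) (fun x => / x)) as [c [Hc E]].
    + intros x Hx. rewrite Rmin_left in Hx by lra. apply is_derive_Reals, derivable_pt_lim_ln. lra.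
    + intros x Hx. rewrite Rmin_left in Hx by lra.
      apply derivable_continuous_pt. exists (/ x). apply derivable_pt_lim_ln. lra.
    + rewrite Rmin_left, Rmax_right in Hc by lra. rewrite E.
      replace (INR m - (INR m - 1)) with 1 by ring. rewrite Rmult_1_r.
      apply Rinv_le_contravar; lra.
  - destruct (Rpower_MVT (INR m - 1) (INR m) (p - 2)) as [xi [Hxi E]]; [lra | lra |].
    replace (Rpower 2 (Rabs (p - 3)) * Rpower (INR m) (p - 2) / (p - 2)
             - Rpower 2 (Rabs (p - 3)) * Rpower (INR m - 1) (p - 2) / (p - 2))
      with (Rpower 2 (Rabs (p - 3)) * ((Rpower (INR m) (p - 2) - Rpower (INR m - 1) (p - 2)) / (p - 2)))
      by (field; lra).
    rewrite E. replace (p - 2 - 1) with (p - 3) by ring.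
    replace ((p - 2) * Rpower xi (p - 3) * (INR m - (INR m - 1)) / (p - 2)) with (Rpower xi (p - 3))
      by (field; lra).
    apply Rpower_le_comparable; lra.
Qed.

Section Rates.
Variables (T sigma g : R) (N n : nat).
Hypotheses (Hsigma : 0 < sigma) (Hg : 1 <= g) (HN : (1 <= N)%nat) (Hn : (1 <= n)%nat).
Local Notation tau := (mesh_tau T g N).
Local Notation G := (power_sum_majorant (g * sigma)).

Lemma rate_subcritical : g * sigma < 2 -> rate T sigma g N n = Rpower tau (g * sigma).
Proof.
  intros Hp. unfold rate. destruct (Req_EM_T g (2 / sigma)) as [E|E].
  - exfalso. rewrite E in Hp. field_simplify in Hp; lra.
  - assert (sigma - 2 / g <= 0).
    { replace (sigma - 2 / g) with ((g * sigma - 2) / g) by (field; lra).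
      apply Rmult_le_0_r; [lra | left; apply Rinv_0_lt_compat; lra]. }
    rewrite Rmin_left, Rmax_left by lra.
    rewrite Rpower_O by (apply mesh_pos; auto). ring.
Qed.

Lemma rate_critical : g * sigma = 2 -> rate T sigma g N n = tau ^ 2 * (1 + g * ln (INR n)).
Proof.
  intros Hp. unfold rate. destruct (Req_EM_T g (2 / sigma)) as [E|E].
  - rewrite !mesh_Rpower by auto. simpl (INR 1). rewrite Rmult_1_l.
    rewrite <- Rpower_mult_distr by (try apply lt_0_INR; try lia; apply mesh_tau_pos; auto).
    unfold Rdiv. rewrite Rmult_assoc, Rinv_r, Rmult_1_r, ln_Rpower by (apply Rgt_not_eq, Rpower_pos).
    reflexivity.
  - exfalso. apply E. field_simplify_eq; lra.
Qed.

Lemma rate_supercritical :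
  2 < g * sigma -> rate T sigma g N n = Rpower (INR n) (g * sigma - 2) * Rpower tau (g * sigma).
Proof.
  intros Hp. unfold rate. destruct (Req_EM_T g (2 / sigma)) as [E|E].
  - exfalso. rewrite E in Hp. field_simplify in Hp; lra.
  - assert (0 <= sigma - 2 / g).
    { replace (sigma - 2 / g) with ((g * sigma - 2) / g) by (field; lra).
      apply Rdiv_le_0_compat; lra. }
    rewrite Rmin_right, Rmax_right by lra.
    rewrite mesh_Rpower, Rpower_mult by auto.
    replace (g * (sigma - 2 / g)) with (g * sigma - 2) by (field; lra).
    rewrite <- Rpower_mult_distr by (try apply lt_0_INR; try lia; apply mesh_tau_pos; auto).
    replace (Rpower tau (g * sigma)) with (Rpower tau (2 + (g * sigma - 2))) by (f_equal; ring).
    rewrite Rpower_plus. ring.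
Qed.

Lemma rate_pos : 0 < rate T sigma g N n.
Proof.
  assert (Htau := mesh_tau_pos T g N HN).
  assert (Hln : 0 <= ln (INR n))
    by (rewrite <- ln_1; apply ln_le; [lra | replace 1 with (INR 1) by reflexivity; apply le_INR, Hn]).
  destruct (total_order_T (g * sigma) 2) as [[Hp|Hp]|Hp].
  - rewrite rate_subcritical by exact Hp. apply Rpower_pos.
  - rewrite rate_critical by exact Hp. apply Rmult_lt_0_compat; [apply pow_lt, Htau | nra].
  - rewrite rate_supercritical by exact Hp. apply Rmult_lt_0_compat; apply Rpower_pos.
Qed.

Section ErrorBound.
Variables a b c : R.
Hypotheses (Ha : 0 <= a) (Hb : 0 <= b) (Hc : 0 <= c).
Let bound := Rpower tau (g * sigma) * (a + b * (G n - G 1) + c * Rpower (INR n) (g * sigma - 2)).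

Lemma error_bound_subcritical :
  g * sigma < 2 -> bound <= (a + b * (Rpower 2 (Rabs (g * sigma - 3)) / (2 - g * sigma)) + c) * rate T sigma g N n.
Proof.
  intros Hp. rewrite rate_subcritical by exact Hp. unfold bound, power_sum_majorant.
  destruct (Req_EM_T (g * sigma) 2) as [E|E]; [lra|].
  set (y := Rpower (INR n) (g * sigma - 2)).
  assert (Hy1 : y <= 1) by (apply Rpower_le_one; [replace 1 with (INR 1) by reflexivity; apply le_INR, Hn | lra]).
  assert (Hy0 : 0 < y) by apply Rpower_pos.
  simpl (INR 1). rewrite Rpower_1_base. fold y.
  set (K := Rpower 2 (Rabs (g * sigma - 3))). assert (HK : 0 < K) by apply Rpower_pos.
  replace (K * y / (g * sigma - 2) - K * 1 / (g * sigma - 2)) with (K / (2 - g * sigma) * (1 - y))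
    by (field; lra).
  assert (0 <= K / (2 - g * sigma)) by (apply Rdiv_le_0_compat; lra).
  assert (Htp : 0 < Rpower tau (g * sigma)) by apply Rpower_pos.
  rewrite Rmult_comm. apply Rmult_le_compat_r; [lra|].
  assert (0 <= b * (K / (2 - g * sigma)) * y) by (apply Rmult_le_pos; [apply Rmult_le_pos|]; lra).
  assert (c * y <= c * 1) by (apply Rmult_le_compat_l; lra).
  nra.
Qed.

Lemma error_bound_critical : g * sigma = 2 -> bound <= (a + b + c) * rate T sigma g N n.
Proof.
  intros Hp. rewrite rate_critical by exact Hp. unfold bound, power_sum_majorant.
  destruct (Req_EM_T (g * sigma) 2) as [_|E]; [|lra].
  simpl (INR 1). rewrite ln_1, Rminus_0_r, Hp, Rminus_diag, Rpower_O by (apply lt_0_INR; lia).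
  replace (Rpower tau 2) with (tau ^ 2)
    by (rewrite <- Rpower_pow by (apply mesh_tau_pos; auto); f_equal; simpl; ring).
  assert (Hln : 0 <= ln (INR n))
    by (rewrite <- ln_1; apply ln_le; [lra | replace 1 with (INR 1) by reflexivity; apply le_INR, Hn]).
  assert (Htau : 0 < tau ^ 2) by (apply pow_lt, mesh_tau_pos; auto).
  rewrite (Rmult_comm (a + b + c)), Rmult_assoc. apply Rmult_le_compat_l; [lra|].
  assert (b * ln (INR n) <= b * (g * ln (INR n))) by (apply Rmult_le_compat_l; nra).
  assert (0 <= g * ln (INR n) * (a + c)) by (apply Rmult_le_pos; nra).
  nra.
Qed.

Lemma error_bound_supercritical :
  2 < g * sigma ->
  bound <= (a + b * (Rpower 2 (Rabs (g * sigma - 3)) / (g * sigma - 2)) + c) * rate T sigma g N n.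
Proof.
  intros Hp. rewrite rate_supercritical by exact Hp. unfold bound, power_sum_majorant.
  destruct (Req_EM_T (g * sigma) 2) as [E|E]; [lra|].
  set (y := Rpower (INR n) (g * sigma - 2)).
  assert (Hy1 : 1 <= y) by (apply Rpower_ge_one; [replace 1 with (INR 1) by reflexivity; apply le_INR, Hn | lra]).
  simpl (INR 1). rewrite Rpower_1_base. fold y.
  set (K := Rpower 2 (Rabs (g * sigma - 3))). assert (HK : 0 < K) by apply Rpower_pos.
  assert (HKp : 0 <= K / (g * sigma - 2)) by (apply Rdiv_le_0_compat; lra).
  assert (HG : K * y / (g * sigma - 2) - K * 1 / (g * sigma - 2) <= K / (g * sigma - 2) * y).
  { assert (0 < K * 1 / (g * sigma - 2)) by (apply Rdiv_lt_0_compat; lra).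
    replace (K * y / (g * sigma - 2)) with (K / (g * sigma - 2) * y) by (field; lra). lra. }
  assert (Htp : 0 < Rpower tau (g * sigma)) by apply Rpower_pos.
  replace ((a + b * (K / (g * sigma - 2)) + c) * (y * Rpower tau (g * sigma)))
    with (Rpower tau (g * sigma) * ((a + b * (K / (g * sigma - 2)) + c) * y)) by ring.
  apply Rmult_le_compat_l; [lra|].
  assert (b * (K * y / (g * sigma - 2) - K * 1 / (g * sigma - 2)) <= b * (K / (g * sigma - 2) * y))
    by (apply Rmult_le_compat_l; lra).
  nra.
Qed.

End ErrorBound.

End Rates.

Lemma error_bound_le_rate T sigma g a b c :
  0 < sigma -> 1 <= g -> 0 <= a -> 0 <= b -> 0 <= c ->
  exists C, 0 < C /\ forall N n, (1 <= N)%nat -> (1 <= n)%nat ->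
    Rpower (mesh_tau T g N) (g * sigma)
    * (a + b * (power_sum_majorant (g * sigma) n - power_sum_majorant (g * sigma) 1)
       + c * Rpower (INR n) (g * sigma - 2))
    <= C * rate T sigma g N n.
Proof.
  intros Hsigma Hg Ha Hb Hc.
  set (K := Rpower 2 (Rabs (g * sigma - 3))). assert (HK : 0 < K) by apply Rpower_pos.
  assert (Hweaken : forall C0 N n, (1 <= N)%nat -> (1 <= n)%nat ->
                      C0 * rate T sigma g N n <= (C0 + 1) * rate T sigma g N n)
    by (intros C0 N n HN Hn; assert (0 < rate T sigma g N n) by (apply rate_pos; auto); lra).
  destruct (total_order_T (g * sigma) 2) as [[Hp|Hp]|Hp].
  - exists (a + b * (K / (2 - g * sigma)) + c + 1).
    assert (0 <= b * (K / (2 - g * sigma))) by (apply Rmult_le_pos; [lra | apply Rdiv_le_0_compat; lra]).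
    split; [lra|]. intros N n HN Hn. eapply Rle_trans; [apply error_bound_subcritical|]; auto.
  - exists (a + b + c + 1). split; [lra|]. intros N n HN Hn.
    eapply Rle_trans; [apply error_bound_critical|]; auto.
  - exists (a + b * (K / (g * sigma - 2)) + c + 1).
    assert (0 <= b * (K / (g * sigma - 2))) by (apply Rmult_le_pos; [lra | apply Rdiv_le_0_compat; lra]).
    split; [lra|]. intros N n HN Hn. eapply Rle_trans; [apply error_bound_supercritical|]; auto.
Qed.

Lemma interp_error_le_rate (V : CompleteNormedModule R_AbsRing) T sigma g Cu (f f1 f2 f3 : R -> V) :
  0 < T -> 0 < sigma -> 1 <= g -> 0 <= Cu ->
  (forall z, continuous f z) ->
  (forall z, 0 < z < T -> is_derive f z (f1 z)) ->
  (forall z, 0 < z < T -> is_derive f1 z (f2 z)) ->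
  (forall z, 0 < z < T -> is_derive f2 z (f3 z)) ->
  (forall z, 0 < z < T -> norm (f1 z) <= Cu * Rpower z (sigma - 1)) ->
  (forall z, 0 < z < T -> norm (f2 z) <= Cu * Rpower z (sigma - 2)) ->
  (forall z, 0 < z < T -> norm (f3 z) <= Cu * Rpower z (sigma - 3)) ->
  exists C, 0 < C /\
  forall N (uh : R -> V), (1 <= N)%nat -> uh 0 = f 0 ->
    (forall n s, (1 <= n <= N)%nat -> mesh T g N (n - 1) <= s <= mesh T g N n ->
       uh s = lin_interp (mesh T g N (n - 1)) (mesh T g N n)
                         (uh (mesh T g N (n - 1))) (uh (mesh T g N n)) s) ->
    (forall n, (1 <= n <= N)%nat ->
       RInt uh (mesh T g N (n - 1)) (mesh T g N n) = RInt f (mesh T g N (n - 1)) (mesh T g N n)) ->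
    forall n s, (1 <= n <= N)%nat -> mesh T g N (n - 1) <= s <= mesh T g N n ->
      norm (minus (f s) (uh s)) <= C * rate T sigma g N n.
Proof.
  intros HT Hsigma Hg HCu Hf Hf1 Hf2 Hf3 Hb1 Hb2 Hb3.
  set (cA := interp_const sigma g Cu). set (cB := interp_diff_const sigma g Cu).
  set (k2 := 2 + Rpower 2 (Rabs (g * sigma - 2))).
  assert (HcA : 0 <= cA) by (apply interp_const_nonneg; lra).
  assert (HcB : 0 <= cB) by (apply interp_diff_const_nonneg; lra).
  assert (Hk2 : 0 <= k2) by (unfold k2; pose proof (Rpower_pos 2 (Rabs (g * sigma - 2))); lra).
  destruct (error_bound_le_rate T sigma g (2 * cA * k2) (2 * cB) (cA * k2)) as [C [HC Hrate]];
    try apply Rmult_le_pos; try lra.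
  exists C. split; [exact HC|]. intros N uh HN Huh0 Hlin Havg n s Hn Hs.
  eapply Rle_trans; [|apply Hrate; lia].
  apply (interior_error_le V T sigma g Cu f f1 f2 f3 uh N (power_sum_majorant (g * sigma))); auto.
  intros m Hm. apply power_sum_majorant_incr, Hm.
Qed.

Section SupNorm.
Context {V : NormedModule R_AbsRing}.

Lemma sup_norm_on_le (h : R -> V) a b B :
  (forall s, a < s < b -> norm (h s) <= B) -> Rbar_le (sup_norm_on h a b) B.
Proof.
  intros HB. unfold sup_norm_on.
  destruct (Lub_Rbar_correct (fun r => exists s, a < s < b /\ r = norm (h s))) as [_ Hlub].
  apply Hlub. intros r [s [Hs ->]]. apply HB, Hs.
Qed.

Lemma norm_le_sup_norm_on (h k : R -> V) a b :
  a < b -> continuous k b -> (forall s, a < s <= b -> h s = k s) ->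
  Rbar_le (norm (h b)) (sup_norm_on h a b).
Proof.
  intros Hab Hk Heq. rewrite Heq by lra. unfold sup_norm_on.
  set (S := fun r => exists s, a < s < b /\ r = norm (h s)).
  destruct (Lub_Rbar_correct S) as [Hub _].
  assert (Hin : forall s, a < s < b -> Rbar_le (norm (k s)) (Lub_Rbar S))
    by (intros s Hs; apply Hub; exists s; split; [exact Hs | rewrite Heq by lra; reflexivity]).
  destruct (Lub_Rbar S) as [l| |]; simpl; [| exact I |].
  - apply (le_at_left_limit (fun s => norm (k s)) (fun _ => l)).
    + apply (continuous_comp k norm); [exact Hk | apply filterlim_norm].
    + apply continuous_const.
    + assert (Hd : 0 < b - a) by lra. exists (mkposreal _ Hd). intros s Hs Hsb.
      change (Rabs (s - b) < b - a) in Hs. apply Rabs_def2 in Hs.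
      exact (Hin s ltac:(cbv beta in Hsb; lra)).
  - exact (Hin ((a + b) / 2) ltac:(lra)).
Qed.

End SupNorm.

Lemma continuous_extension_derive {V : NormedModule R_AbsRing} (u u1 : R -> V) T :
  0 < T ->
  filterlim u (at_right 0) (locally (u 0)) -> filterlim u (at_left T) (locally (u T)) ->
  (forall t, 0 < t < T -> is_derive u t (u1 t)) ->
  exists ue : R -> V, (forall z, continuous ue z) /\ (forall t, 0 <= t <= T -> ue t = u t)
                      /\ (forall t, 0 < t < T -> is_derive ue t (u1 t)).
Proof.
  intros HT H0 HTl Hd.
  destruct (C0_extension_lt u (u 0) (u T) 0 T HT) as [ue [Hc [Hin [He0 HeT]]]];
    [intros c Hc; apply ex_derive_continuous; exists (u1 c); apply Hd, Hc | exact H0 | exact HTl |].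
  exists ue. split; [exact Hc|]. split.
  - intros t Ht. destruct (Req_dec t 0) as [->|Ht0]; [exact He0|].
    destruct (Req_dec t T) as [->|HtT]; [exact HeT | apply Hin; lra].
  - intros t Ht. apply (is_derive_ext_loc u); [|apply Hd, Ht].
    assert (Hr : 0 < Rmin t (T - t)) by (apply Rmin_pos; lra).
    exists (mkposreal _ Hr). intros s Hs. change (Rabs (s - t) < Rmin t (T - t)) in Hs.
    pose proof (Rmin_l t (T - t)). pose proof (Rmin_r t (T - t)). apply Rabs_def2 in Hs.
    symmetry. apply Hin. lra.
Qed.

Lemma Rpower_le_div_pow t k x c sigma :
  0 < t -> t ^ k * x <= c * Rpower t sigma -> x <= c * Rpower t (sigma - INR k).
Proof.
  intros Ht H. apply (Rmult_le_reg_l (t ^ k)); [apply pow_lt, Ht|].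
  replace (t ^ k * (c * Rpower t (sigma - INR k))) with (c * Rpower t sigma); [exact H|].
  rewrite <- (Rpower_pow k t Ht). replace sigma with (INR k + (sigma - INR k)) at 1 by ring.
  rewrite Rpower_plus. ring.
Qed.

Lemma regularity_split {V : NormedModule R_AbsRing} (u1 u2 u3 : R -> V) T sigma Cu :
  0 < T ->
  (forall t, 0 < t < T ->
     t * norm (u1 t) + t ^ 2 * norm (u2 t) + t ^ 3 * norm (u3 t) <= Cu * Rpower t sigma) ->
  0 <= Cu
  /\ (forall t, 0 < t < T -> norm (u1 t) <= Cu * Rpower t (sigma - 1))
  /\ (forall t, 0 < t < T -> norm (u2 t) <= Cu * Rpower t (sigma - 2))
  /\ (forall t, 0 < t < T -> norm (u3 t) <= Cu * Rpower t (sigma - 3)).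
Proof.
  intros HT Hreg.
  assert (Hterms : forall t, 0 < t < T ->
            0 <= t * norm (u1 t) /\ 0 <= t ^ 2 * norm (u2 t) /\ 0 <= t ^ 3 * norm (u3 t)).
  { intros t Ht. repeat split; apply Rmult_le_pos; try apply pow_le; try apply norm_ge_0; lra. }
  split; [|split; [|split]].
  - destruct (Hterms (T / 2) ltac:(lra)) as (H1 & H2 & H3).
    assert (H := Hreg (T / 2) ltac:(lra)). assert (0 < Rpower (T / 2) sigma) by apply Rpower_pos.
    destruct (Rle_lt_dec 0 Cu); [assumption | nra].
  - intros t Ht. destruct (Hterms t Ht) as (H1 & H2 & H3). assert (H := Hreg t Ht).
    replace 1 with (INR 1) by reflexivity. apply Rpower_le_div_pow; [lra | simpl; lra].
  - intros t Ht. destruct (Hterms t Ht) as (H1 & H2 & H3). assert (H := Hreg t Ht).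
    replace 2 with (INR 2) by (simpl; ring). apply Rpower_le_div_pow; lra.
  - intros t Ht. destruct (Hterms t Ht) as (H1 & H2 & H3). assert (H := Hreg t Ht).
    replace 3 with (INR 3) by (simpl; ring). apply Rpower_le_div_pow; lra.
Qed.

Theorem corollary3p3
  (V : CompleteNormedModule R_AbsRing) (T sigma gamma : R)
  (u u1 u2 u3 : R -> V) (Cu : R) :
  0 < T -> 0 < sigma -> 1 <= gamma ->
  (* u is continuous on [0,T] *)
  filterlim u (at_right 0) (locally (u 0)) ->
  filterlim u (at_left T) (locally (u T)) ->
  (* u', u'', u''' exist on (0,T) *)
  (forall t, 0 < t < T -> is_derive u t (u1 t)) ->
  (forall t, 0 < t < T -> is_derive u1 t (u2 t)) ->
  (forall t, 0 < t < T -> is_derive u2 t (u3 t)) ->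
  (* regularity estimate *)
  (forall t, 0 < t < T ->
     t * norm (u1 t) + t ^ 2 * norm (u2 t) + t ^ 3 * norm (u3 t)
       <= Cu * Rpower t sigma) ->
  exists C : R, 0 < C /\
  forall (N : nat) (uh : R -> V),
    (1 <= N)%nat ->
    uh 0 = u 0 ->
    (* uh is linear on each closed interval [t_{n-1}, t_n] *)
    (forall n t, (1 <= n <= N)%nat ->
       mesh T gamma N (n - 1) <= t <= mesh T gamma N n ->
       uh t = plus
         (scal ((mesh T gamma N n - t) / (mesh T gamma N n - mesh T gamma N (n - 1)))
               (uh (mesh T gamma N (n - 1))))
         (scal ((t - mesh T gamma N (n - 1)) / (mesh T gamma N n - mesh T gamma N (n - 1)))
               (uh (mesh T gamma N n)))) ->
    (* equal averages over each I_n *)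
    (forall n, (1 <= n <= N)%nat ->
       RInt uh (mesh T gamma N (n - 1)) (mesh T gamma N n)
       = RInt u (mesh T gamma N (n - 1)) (mesh T gamma N n)) ->
    forall n, (1 <= n <= N)%nat ->
      let psi := fun t => minus (u t) (uh t) in
      Rbar_le (norm (psi (mesh T gamma N n)))
              (sup_norm_on psi (mesh T gamma N (n - 1)) (mesh T gamma N n)) /\
      Rbar_le (sup_norm_on psi (mesh T gamma N (n - 1)) (mesh T gamma N n))
              (C * rate T sigma gamma N n).
Proof.
  intros HT Hsigma Hgamma Hu0 HuT Hd1 Hd2 Hd3 Hreg.
  destruct (regularity_split u1 u2 u3 T sigma Cu HT Hreg) as (HCu & Hb1 & Hb2 & Hb3).
  destruct (continuous_extension_derive u u1 T HT Hu0 HuT Hd1) as (ue & Hue_c & Hue_eq & Hue_d).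
  destruct (interp_error_le_rate V T sigma gamma Cu ue u1 u2 u3) as [C [HC Herr]]; auto.
  exists C. split; [exact HC|].
  intros N uh HN Huh0 Hlin Havg n Hn psi.
  assert (Hcell := mesh_cell_in_domain T gamma N HT Hgamma HN).
  assert (Hab : mesh T gamma N (n - 1) < mesh T gamma N n) by (apply mesh_lt; auto; lia).
  assert (Hpsi : forall s, mesh T gamma N (n - 1) <= s <= mesh T gamma N n -> psi s = minus (ue s) (uh s))
    by (intros s Hs; unfold psi; rewrite Hue_eq by (apply (Hcell n); auto); reflexivity).
  split.
  - set (a := mesh T gamma N (n - 1)) in *. set (b := mesh T gamma N n) in *.
    apply (norm_le_sup_norm_on psi (fun s => minus (ue s) (lin_interp a b (uh a) (uh b) s)));
      [exact Hab | exact (continuous_minus _ _ b (Hue_c b) (continuous_lin_interp a b (uh a) (uh b) b)) |].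
    intros s Hs. unfold a, b in *. rewrite Hpsi, (Hlin n s Hn) by lra. reflexivity.
  - apply sup_norm_on_le. intros s Hs. rewrite Hpsi by lra.
    apply Herr; auto; [rewrite Huh0; symmetry; apply Hue_eq; lra | | lra].
    intros m Hm. rewrite Havg by exact Hm.
    apply RInt_ext_on; [apply mesh_le; auto; lia|].
    intros x Hx. symmetry. apply Hue_eq, (Hcell m); auto.
Qed.
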